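(* Let $\Omega\subset\mathbb{C}$ be a simply connected domain, let $(g,\mathcal{P},\mathcal{Q})$ be a Weierstrass data of the first kind on $\Omega$, and let $\lambda\in\mathbb{R}$ be such that $1+i\lambda g(z)\neq0$ for all $z\in\Omega$. Set $g_\lambda:=\frac{g}{1+i\lambda g}$ and $\mathcal{P}_\lambda:=\mathcal{P}$. Then there exists a $\mathcal{C}^2$ function $\mathcal{Q}_\lambda:\Omega\to\mathbb{R}$ satisfying $$(\mathcal{Q}_\lambda)_z=\left(\frac1g+i\lambda\right)\left(g\,\mathcal{Q}_z-i\lambda\,\mathcal{P}_z\right),$$ and for any such $\mathcal{Q}_\lambda$ the triple $(g_\lambda,\mathcal{P}_\lambda,\mathcal{Q}_\lambda)$ is a Weierstrass data of the first kind on $\Omega$.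
   Context: $\Omega\subset\mathbb{R}^2\equiv\mathbb{C}$ has complex coordinate $z=u+iv$, and $\partial_z=\frac12(\partial_u-i\partial_v)$, $\partial_{\overline z}=\frac12(\partial_u+i\partial_v)$; subscripts denote partial derivatives. A Weierstrass data of the first kind on $\Omega$ is a triple $(g,\mathcal{P},\mathcal{Q})$ where $g:\Omega\to\mathbb{C}\setminus\{0\}$ and $\mathcal{P},\mathcal{Q}:\Omega\to\mathbb{R}$ are $\mathcal{C}^2$, satisfying $g_{\overline z}=0$, $\mathcal{P}_{z\overline z}=|g|^2\mathcal{Q}_{z\overline z}$, and $\mathcal{P}_z-|g|^2\mathcal{Q}_z\neq0$ at every point of $\Omega$. *)

From Stdlib Require Import Reals.
From Coquelicot Require Import Coquelicot.

(* A point z = (u, v) of C = R^2; u = Re z, v = Im z. *)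

Definition pu (f : C -> R) (z : C) : R :=
  Derive (fun t => f (t, Im z)) (Re z).
Definition pv (f : C -> R) (z : C) : R :=
  Derive (fun t => f (Re z, t)) (Im z).

Definition Cpu (F : C -> C) (z : C) : C :=
  (pu (fun w => Re (F w)) z, pu (fun w => Im (F w)) z).
Definition Cpv (F : C -> C) (z : C) : C :=
  (pv (fun w => Re (F w)) z, pv (fun w => Im (F w)) z).

Definition Dz (F : C -> C) (z : C) : C :=
  (/ 2 * (Cpu F z - Ci * Cpv F z))%C.
Definition Dzb (F : C -> C) (z : C) : C :=
  (/ 2 * (Cpu F z + Ci * Cpv F z))%C.

Definition RC (f : C -> R) : C -> C := fun z => RtoC (f z).

Definition C2R (Omega : C -> Prop) (f : C -> R) : Prop :=
  forall z, Omega z ->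
    ex_derive (fun t => f (t, Im z)) (Re z) /\
    ex_derive (fun t => f (Re z, t)) (Im z) /\
    ex_derive (fun t => pu f (t, Im z)) (Re z) /\
    ex_derive (fun t => pu f (Re z, t)) (Im z) /\
    ex_derive (fun t => pv f (t, Im z)) (Re z) /\
    ex_derive (fun t => pv f (Re z, t)) (Im z) /\
    continuous f z /\
    continuous (pu f) z /\ continuous (pv f) z /\
    continuous (pu (pu f)) z /\ continuous (pv (pu f)) z /\
    continuous (pu (pv f)) z /\ continuous (pv (pv f)) z.

Definition C2C (Omega : C -> Prop) (F : C -> C) : Prop :=
  C2R Omega (fun w => Re (F w)) /\ C2R Omega (fun w => Im (F w)).

Definition is_domain (Omega : C -> Prop) : Prop :=
  open Omega /\ (exists z, Omega z) /\
  forall U V : C -> Prop, open U -> open V ->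
    (forall z, Omega z -> U z \/ V z) ->
    (exists z, Omega z /\ U z) -> (exists z, Omega z /\ V z) ->
    exists z, Omega z /\ U z /\ V z.

(* Continuous maps on
   [0,1] resp. [0,1]^2 are represented by continuous maps on R resp. R^2
   (every continuous map on [0,1]^n extends continuously by clamping). *)
Definition simply_connected (Omega : C -> Prop) : Prop :=
  is_domain Omega /\
  forall gam : R -> C,
    (forall t, continuous gam t) ->
    (forall t, 0 <= t <= 1 -> Omega (gam t)) ->
    gam 0 = gam 1 ->
    exists H : C -> C,
      (forall p, continuous H p) /\
      (forall s t, 0 <= s <= 1 -> 0 <= t <= 1 -> Omega (H (s, t))) /\
      (forall s, 0 <= s <= 1 -> H (s, 0) = gam s) /\
      (forall s, 0 <= s <= 1 -> H (s, 1) = gam 0) /\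
      (forall t, 0 <= t <= 1 -> H (0, t) = gam 0 /\ H (1, t) = gam 0).

Definition WD1 (Omega : C -> Prop) (g : C -> C) (P Q : C -> R) : Prop :=
  C2C Omega g /\ C2R Omega P /\ C2R Omega Q /\
  forall z, Omega z ->
    g z <> 0%C /\
    Dzb g z = 0%C /\
    Dz (Dzb (RC P)) z = (RtoC (Cmod (g z) ^ 2) * Dz (Dzb (RC Q)) z)%C /\
    (Dz (RC P) z - RtoC (Cmod (g z) ^ 2) * Dz (RC Q) z)%C <> 0%C.

From Stdlib Require Import Reals Lra Lia Psatz ClassicalEpsilon FunctionalExtensionality Classical.
From Coquelicot Require Import Coquelicot.
Open Scope R_scope.

(* Write q for (Q_lambda)_z = (1/g + i lambda)(g Q_z - i lambda P_z).  Since g is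
   holomorphic, q_zbar = (1/g + i lambda)(g - i lambda |g|^2) Q_{z zbar}, which is
   real; for a real function F this says exactly that the 1-form
   2 Re q du - 2 Im q dv is closed, and F_z = q means that F is a primitive of
   that form.  On a simply connected domain every closed C^1 form has a
   primitive (Poincare lemma), which gives Q_lambda.  Conversely, once
   (Q_lambda)_z = q, the identities of a Weierstrass data for
   (g_lambda, P, Q_lambda) are algebraic consequences of those for (g, P, Q):
   g_lambda is holomorphic as a quotient of holomorphic functions,
   |g_lambda|^2 (Q_lambda)_{z zbar} = |g|^2 Q_{z zbar} = P_{z zbar}, and
   P_z - |g_lambda|^2 (Q_lambda)_z is P_z - |g|^2 Q_z times a nonzero factor.

   The Poincare lemma is proved by integrating along "corner" paths (first
   horizontally, then vertically): inside a square contained in the domain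
   these integrals are path independent, and summing them along chains of
   points defines a primitive once the sum along every closed chain vanishes.
   The latter follows by subdividing a null-homotopy of the polygonal loop
   through the chain into cells, each lying in a square. *)

(** * Squares and continuity in the plane *)

Definition in_square (c : C) (r : R) (w : C) : Prop :=
  Rabs (Re w - Re c) < r /\ Rabs (Im w - Im c) < r.

Lemma ball_square_iff (c w : C) (r : R) : ball c r w <-> in_square c r w.
Proof.
  destruct c as [x y], w as [u v]. unfold ball; simpl. unfold prod_ball; simpl.
  unfold ball; simpl. unfold AbsRing_ball, abs, minus, plus, opp; simpl.
  unfold in_square; simpl. tauto.
Qed.

Lemma open_square_nbhd (Omega : C -> Prop) (z : C) : open Omega -> Omega z ->
  exists r, 0 < r /\ forall w, in_square z r w -> Omega w.
Proof.
  intros Ho Hz. destruct (Ho z Hz) as [e He].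
  exists e. split; [apply cond_pos|]. intros w Hw. apply He, ball_square_iff, Hw.
Qed.

Lemma locally_square_iff (z : C) (P : C -> Prop) :
  locally z P <-> exists r, 0 < r /\ forall w, in_square z r w -> P w.
Proof.
  split.
  - intros [e He]. exists e. split; [apply cond_pos|]. intros w Hw. apply He, ball_square_iff, Hw.
  - intros [r [Hr H]]. exists (mkposreal r Hr). intros w Hw. apply H, ball_square_iff, Hw.
Qed.

Lemma in_square_center z r : 0 < r -> in_square z r z.
Proof. intros Hr. split; replace (_ - _) with 0 by ring; rewrite Rabs_R0; auto. Qed.

Lemma Rabs_diag_lt (x y r : R) : Rabs (y - x) < r -> Rabs (x - x) < r.
Proof. intros H. rewrite Rminus_diag, Rabs_R0. eapply Rle_lt_trans; [apply Rabs_pos | exact H]. Qed.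

Lemma Rabs_between_lt (a b c r s : R) : Rabs (a - c) < r -> Rabs (b - c) < r ->
  Rmin a b <= s <= Rmax a b -> Rabs (s - c) < r.
Proof.
  intros H1 H2 H3. unfold Rmin, Rmax in H3. destruct (Rle_dec a b);
  revert H1 H2; unfold Rabs; repeat destruct Rcase_abs; lra.
Qed.

Lemma Rabs_lt_nbhd (a c r : R) : Rabs (a - c) < r ->
  exists e, 0 < e /\ forall t, Rabs (t - a) < e -> Rabs (t - c) < r.
Proof.
  intros H. exists (r - Rabs (a - c)). split; [lra|]. intros t Ht.
  revert H Ht; unfold Rabs; repeat destruct Rcase_abs; lra.
Qed.

Lemma locally_of_Rabs (x : R) (P : R -> Prop) (e : R) : 0 < e ->
  (forall t, Rabs (t - x) < e -> P t) -> locally x P.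
Proof. intros He H. exists (mkposreal e He). intros t Ht. apply H, Ht. Qed.

Lemma Rabs_convex_lt (x1 x2 c r th : R) : Rabs (x1 - c) < r -> Rabs (x2 - c) < r ->
  0 <= th <= 1 -> Rabs (x1 + th * (x2 - x1) - c) < r.
Proof.
  intros H1 H2 H3.
  replace (x1 + th * (x2 - x1) - c) with ((1 - th) * (x1 - c) + th * (x2 - c)) by ring.
  eapply Rle_lt_trans; [apply Rabs_triang|]. rewrite !Rabs_mult.
  rewrite (Rabs_right (1 - th)), (Rabs_right th) by lra.
  destruct (Req_dec th 0); [subst; lra|]. destruct (Req_dec th 1); [subst; lra|]. nra.
Qed.

Lemma in_square_segment c r p q th : in_square c r p -> in_square c r q -> 0 <= th <= 1 ->
  in_square c r (Re p + th * (Re q - Re p), Im p + th * (Im q - Im p)).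
Proof. intros [H1 H2] [H3 H4] H5. split; simpl; apply Rabs_convex_lt; auto. Qed.

(* Coquelicot's continuity lemmas, with the normed-module instances fixed to R. *)
Lemma continuous_plus_R {U : UniformSpace} (f g : U -> R) x :
  continuous f x -> continuous g x -> continuous (fun y => f y + g y) x.
Proof. exact (@continuous_plus U R_AbsRing R_NormedModule f g x). Qed.
Lemma continuous_mult_R {U : UniformSpace} (f g : U -> R) x :
  continuous f x -> continuous g x -> continuous (fun y => f y * g y) x.
Proof. exact (@continuous_mult U R_AbsRing f g x). Qed.
Lemma continuous_opp_R {U : UniformSpace} (f : U -> R) x :
  continuous f x -> continuous (fun y => - f y) x.
Proof. exact (@continuous_opp U R_AbsRing R_NormedModule f x). Qed.
Lemma continuous_const_R {U : UniformSpace} (c : R) (x : U) : continuous (fun _ => c) x.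
Proof. exact (@continuous_const U R_UniformSpace c x). Qed.
Lemma continuous_inv_R {U : UniformSpace} (f : U -> R) x :
  continuous f x -> f x <> 0 -> continuous (fun y => / f y) x.
Proof. intros H1 H2. apply (continuous_comp f Rinv); [auto|]. apply continuous_Rinv, H2. Qed.
Lemma continuous_abs_R {U : UniformSpace} (f : U -> R) x :
  continuous f x -> continuous (fun y => Rabs (f y)) x.
Proof. intros H. apply (continuous_comp f Rabs); [auto|]. apply continuous_Rabs. Qed.

Lemma continuous_pair {U : UniformSpace} (f g : U -> R) (z : U) :
  continuous f z -> continuous g z -> continuous (fun w => (f w, g w) : C) z.
Proof.
  intros Hf Hg. apply (continuous_comp_2 f g (fun a b => (a, b) : C)); auto.
  apply continuous_ext with (f := fun x : R * R => x); [intros [a b]; reflexivity|].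
  apply continuous_id.
Qed.

Lemma continuous_horizontal (f : C -> R) (z : C) :
  continuous f z -> continuous (fun t => f (t, Im z)) (Re z).
Proof.
  intros H. apply (continuous_comp (fun t => (t, Im z) : C) f).
  - apply continuous_pair; [apply continuous_id | apply continuous_const_R].
  - destruct z; exact H.
Qed.

Lemma continuous_vertical (f : C -> R) (z : C) :
  continuous f z -> continuous (fun t => f (Re z, t)) (Im z).
Proof.
  intros H. apply (continuous_comp (fun t => (Re z, t) : C) f).
  - apply continuous_pair; [apply continuous_const_R | apply continuous_id].
  - destruct z; exact H.
Qed.

Lemma continuity_2d_pt_of_continuous (f : C -> R) (x y : R) :
  continuous f (x, y) -> continuity_2d_pt (fun u v => f (u, v)) x y.
Proof.
  intros H. apply continuity_2d_pt_filterlim.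
  eapply filterlim_ext; [|exact H]. intros [a b]; reflexivity.
Qed.

Lemma continuous_locally_bounded (f : C -> R) z : continuous f z ->
  exists r, 0 < r /\ forall w, in_square z r w -> Rabs (f w) <= Rabs (f z) + 1.
Proof.
  intros H. unfold continuous in H. rewrite filterlim_locally in H.
  specialize (H (mkposreal 1 Rlt_0_1)).
  apply locally_square_iff in H. destruct H as [r [Hr H]]. exists r. split; [auto|].
  intros w Hw. specialize (H w Hw).
  unfold ball in H; simpl in H. unfold AbsRing_ball, abs, minus, plus, opp in H; simpl in H.
  revert H; unfold Rabs; repeat destruct Rcase_abs; lra.
Qed.

Lemma continuous_of_squares (f : C -> R) z :
  (forall eps, 0 < eps -> exists d, 0 < d /\ forall w, in_square z d w -> Rabs (f w - f z) < eps) ->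
  continuous f z.
Proof.
  intros H. unfold continuous. apply filterlim_locally. intros eps. apply locally_square_iff.
  destruct (H eps (cond_pos eps)) as [d [Hd H2]]. exists d. auto.
Qed.

Lemma Rabs_RInt_le (f : R -> R) (x1 x2 K : R) : ex_RInt f x1 x2 ->
  (forall t, Rmin x1 x2 <= t <= Rmax x1 x2 -> Rabs (f t) <= K) ->
  Rabs (RInt f x1 x2) <= Rabs (x2 - x1) * K.
Proof.
  intros He Hb. destruct (Rle_dec x1 x2).
  - rewrite (Rabs_right (x2 - x1)) by lra. apply abs_RInt_le_const; auto.
    intros t Ht. apply Hb. rewrite Rmin_left, Rmax_right by lra. auto.
  - rewrite <- (opp_RInt_swap f x2 x1) by (apply ex_RInt_swap; auto).
    unfold opp; simpl. rewrite Rabs_Ropp, (Rabs_left (x2 - x1)) by lra.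
    replace (- (x2 - x1)) with (x1 - x2) by ring.
    apply abs_RInt_le_const; [lra | apply ex_RInt_swap; auto |].
    intros t Ht. apply Hb. rewrite Rmin_right, Rmax_left by lra. auto.
Qed.

(** * Corner integrals of a closed form *)

(* The 1-form a du + b dv is closed: a_v exists and equals the continuous b_u. *)
Definition closed_form (Omega : C -> Prop) (a b : C -> R) : Prop := forall z, Omega z ->
  continuous a z /\ continuous b z /\ ex_derive (fun t => b (t, Im z)) (Re z) /\
  continuous (pu b) z /\ is_derive (fun t => a (Re z, t)) (Im z) (pu b z).

Definition corner_integral (a b : C -> R) (p q : C) : R :=
  RInt (fun t => a (t, Im p)) (Re p) (Re q) + RInt (fun s => b (Re q, s)) (Im p) (Im q).

Lemma corner_integral_refl (a b : C -> R) (p : C) : corner_integral a b p p = 0.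
Proof. unfold corner_integral. rewrite !RInt_point. unfold zero; simpl. ring. Qed.

Ltac coord_in_square :=
  first
  [ assumption
  | match goal with H : Rmin ?a ?b <= ?s <= Rmax ?a ?b |- Rabs (?s - ?c) < ?r =>
      exact (Rabs_between_lt a b c r s ltac:(assumption) ltac:(assumption) H) end
  | match goal with H : forall t, Rabs (t - _) < _ -> Rabs (t - _) < _ |- _ =>
      apply H; assumption end ].

Section Square.
Variables (Omega : C -> Prop) (a b : C -> R).
Hypothesis Hform : closed_form Omega a b.
Variables (c : C) (r : R).
Hypothesis Hsq : forall w, in_square c r w -> Omega w.

Let square_point (x y : R) :
  Rabs (x - Re c) < r -> Rabs (y - Im c) < r -> Omega (x, y).
Proof. intros; apply Hsq; split; simpl; auto. Qed.

Ltac form_at x y := let H := fresh in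
  assert (H : Omega (x, y)) by (apply square_point; coord_in_square);
  destruct (Hform _ H) as [? [? [? [? ?]]]]; clear H.

Lemma ex_RInt_vertical (x y1 y2 : R) :
  Rabs (x - Re c) < r -> Rabs (y1 - Im c) < r -> Rabs (y2 - Im c) < r ->
  ex_RInt (fun s => b (x, s)) y1 y2.
Proof.
  intros H1 H2 H3. apply (@ex_RInt_continuous R_CompleteNormedModule). intros s Hs.
  form_at x s. apply (continuous_vertical b (x, s)). assumption.
Qed.

Lemma ex_RInt_horizontal (y x1 x2 : R) :
  Rabs (y - Im c) < r -> Rabs (x1 - Re c) < r -> Rabs (x2 - Re c) < r ->
  ex_RInt (fun t => a (t, y)) x1 x2.
Proof.
  intros H1 H2 H3. apply (@ex_RInt_continuous R_CompleteNormedModule). intros s Hs.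
  form_at s y. apply (continuous_horizontal a (s, y)). assumption.
Qed.

Lemma is_derive_RInt_horizontal (y x1 x : R) :
  Rabs (y - Im c) < r -> Rabs (x1 - Re c) < r -> Rabs (x - Re c) < r ->
  is_derive (fun t => RInt (fun s => a (s, y)) x1 t) x (a (x, y)).
Proof.
  intros H1 H2 H3. destruct (Rabs_lt_nbhd _ _ _ H3) as [e [He Ht]].
  apply (@is_derive_RInt R_NormedModule (fun s => a (s, y)) _ x1).
  - apply (locally_of_Rabs x _ e He). intros t Hte.
    apply (@RInt_correct R_CompleteNormedModule), ex_RInt_horizontal; auto.
  - form_at x y. apply (continuous_horizontal a (x, y)). assumption.
Qed.

Lemma is_derive_RInt_vertical (x y1 y : R) :
  Rabs (x - Re c) < r -> Rabs (y1 - Im c) < r -> Rabs (y - Im c) < r ->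
  is_derive (fun t => RInt (fun s => b (x, s)) y1 t) y (b (x, y)).
Proof.
  intros H1 H2 H3. destruct (Rabs_lt_nbhd _ _ _ H3) as [e [He Ht]].
  apply (@is_derive_RInt R_NormedModule (fun s => b (x, s)) _ y1).
  - apply (locally_of_Rabs y _ e He). intros t Hte.
    apply (@RInt_correct R_CompleteNormedModule), ex_RInt_vertical; auto.
  - form_at x y. apply (continuous_vertical b (x, y)). assumption.
Qed.

(* Differentiation under the integral sign, then b_u = a_v and the fundamental theorem. *)
Lemma is_derive_vertical_RInt_param (x y : R) :
  Rabs (x - Re c) < r -> Rabs (y - Im c) < r ->
  is_derive (fun t => RInt (fun s => b (t, s)) (Im c) y) x (a (x, y) - a (x, Im c)).
Proof.
  intros H1 H2.
  assert (Hc := Rabs_diag_lt (Im c) y _ H2).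
  destruct (Rabs_lt_nbhd _ _ _ H1) as [e [He Ht]].
  assert (Hv : RInt (fun s => Derive (fun u => b (u, s)) x) (Im c) y = a (x, y) - a (x, Im c)).
  { apply is_RInt_unique.
    apply (@is_RInt_derive R_CompleteNormedModule (fun s => a (x, s))).
    - intros s Hs. form_at x s. assumption.
    - intros s Hs. form_at x s. apply (continuous_vertical (pu b) (x, s)). assumption. }
  rewrite <- Hv. apply (is_derive_RInt_param (fun u s => b (u, s))).
  - apply (locally_of_Rabs x _ e He). intros t Hte s Hs. form_at t s. assumption.
  - intros s Hs. form_at x s. apply (continuity_2d_pt_of_continuous (pu b) x s). assumption.
  - apply (locally_of_Rabs x _ e He). intros t Hte. apply ex_RInt_vertical; auto.
Qed.

Lemma is_derive_corner_integral (w : C) : in_square c r w ->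
  is_derive (fun t => corner_integral a b c (t, Im w)) (Re w) (a w) /\
  is_derive (fun t => corner_integral a b c (Re w, t)) (Im w) (b w).
Proof.
  destruct w as [x y]. intros [H1 H2]; simpl in *.
  assert (Hc := Rabs_diag_lt (Im c) y _ H2). assert (Hc' := Rabs_diag_lt (Re c) x _ H1).
  unfold corner_integral; simpl. split.
  - replace (a (x, y)) with (a (x, Im c) + (a (x, y) - a (x, Im c))) by ring.
    apply (is_derive_plus (fun t => RInt (fun t0 => a (t0, Im c)) (Re c) t)
                          (fun t => RInt (fun s => b (t, s)) (Im c) y)).
    + apply is_derive_RInt_horizontal; auto.
    + apply is_derive_vertical_RInt_param; auto.
  - replace (b (x, y)) with (0 + b (x, y)) by ring.
    apply (is_derive_plus (fun _ => RInt (fun t0 => a (t0, Im c)) (Re c) x)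
                          (fun t => RInt (fun s => b (x, s)) (Im c) t)).
    + apply (@is_derive_const R_AbsRing R_NormedModule).
    + apply is_derive_RInt_vertical; auto.
Qed.

Lemma corner_integral_square (p q : C) : in_square c r p -> in_square c r q ->
  corner_integral a b p q = corner_integral a b c q - corner_integral a b c p.
Proof.
  destruct p as [xp yp], q as [xq yq]. intros [Hp1 Hp2] [Hq1 Hq2]; simpl in *.
  unfold corner_integral at 1; simpl.
  assert (E1 : RInt (fun t => a (t, yp)) xp xq
               = corner_integral a b c (xq, yp) - corner_integral a b c (xp, yp)).
  { apply is_RInt_unique,
      (@is_RInt_derive R_CompleteNormedModule (fun t => corner_integral a b c (t, yp))).
    - intros t Ht. apply (is_derive_corner_integral (t, yp)). split; simpl; coord_in_square.
    - intros t Ht. form_at t yp. apply (continuous_horizontal a (t, yp)). assumption. }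
  assert (E2 : RInt (fun s => b (xq, s)) yp yq
               = corner_integral a b c (xq, yq) - corner_integral a b c (xq, yp)).
  { apply is_RInt_unique,
      (@is_RInt_derive R_CompleteNormedModule (fun t => corner_integral a b c (xq, t))).
    - intros t Ht. apply (is_derive_corner_integral (xq, t)). split; simpl; coord_in_square.
    - intros t Ht. form_at xq t. apply (continuous_vertical b (xq, t)). assumption. }
  rewrite E1, E2. ring.
Qed.

Lemma corner_integral_chasles p q s : in_square c r p -> in_square c r q -> in_square c r s ->
  corner_integral a b p q + corner_integral a b q s = corner_integral a b p s.
Proof.
  intros. rewrite (corner_integral_square p q), (corner_integral_square q s),
    (corner_integral_square p s) by auto. ring.
Qed.

Lemma corner_integral_cell p q s t :
  in_square c r p -> in_square c r q -> in_square c r s -> in_square c r t ->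
  corner_integral a b p q - corner_integral a b s t =
  corner_integral a b p s - corner_integral a b q t.
Proof.
  intros. rewrite (corner_integral_square p q), (corner_integral_square s t),
    (corner_integral_square p s), (corner_integral_square q t) by auto. ring.
Qed.

Lemma Rabs_corner_integral_le (rho K : R) : rho <= r ->
  (forall w, in_square c rho w -> Rabs (a w) <= K /\ Rabs (b w) <= K) ->
  forall w, in_square c rho w ->
  Rabs (corner_integral a b c w) <= (Rabs (Re w - Re c) + Rabs (Im w - Im c)) * K.
Proof.
  intros Hrho Hb [x y] [H1 H2]; simpl in *.
  assert (Hc := Rabs_diag_lt (Im c) y _ H2). assert (Hc' := Rabs_diag_lt (Re c) x _ H1).
  unfold corner_integral; simpl. rewrite Rmult_plus_distr_r.
  eapply Rle_trans; [apply Rabs_triang | apply Rplus_le_compat].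
  - apply Rabs_RInt_le; [apply ex_RInt_horizontal; lra|].
    intros t Ht. apply (Hb (t, Im c)). split; simpl; coord_in_square.
  - apply Rabs_RInt_le; [apply ex_RInt_vertical; lra|].
    intros t Ht. apply (Hb (x, t)). split; simpl; coord_in_square.
Qed.

Lemma continuous_corner_integral : 0 < r -> continuous (corner_integral a b c) c.
Proof.
  intros Hr. destruct (Hform c (Hsq c (in_square_center c r Hr))) as [Ha [Hb _]].
  destruct (continuous_locally_bounded a c Ha) as [ra [Hra Ba]].
  destruct (continuous_locally_bounded b c Hb) as [rb [Hrb Bb]].
  set (K := Rabs (a c) + Rabs (b c) + 1).
  assert (HK : 0 < K) by (unfold K; generalize (Rabs_pos (a c)) (Rabs_pos (b c)); lra).
  set (rho := Rmin r (Rmin ra rb)).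
  assert (Hrho : 0 < rho) by (unfold rho; repeat apply Rmin_pos; auto).
  assert (Hr1 : rho <= r) by apply Rmin_l.
  assert (Hr2 : rho <= ra) by (eapply Rle_trans; [apply Rmin_r | apply Rmin_l]).
  assert (Hr3 : rho <= rb) by (eapply Rle_trans; [apply Rmin_r | apply Rmin_r]).
  assert (Hbd := Rabs_corner_integral_le rho K Hr1).
  apply continuous_of_squares. intros eps Heps.
  set (d := Rmin rho (eps / (2 * K + 2))).
  assert (Hd1 : d <= rho) by apply Rmin_l.
  assert (Hd2 : d <= eps / (2 * K + 2)) by apply Rmin_r.
  assert (Hd : 0 < d) by (apply Rmin_pos; [auto | apply Rdiv_lt_0_compat; lra]).
  exists d. split; [auto|]. intros w [H1 H2].
  rewrite corner_integral_refl, Rminus_0_r.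
  eapply Rle_lt_trans.
  { apply Hbd; [|split; lra].
    intros u [Hu1 Hu2]. split.
    - eapply Rle_trans; [apply Ba; split; lra|]. unfold K. generalize (Rabs_pos (b c)); lra.
    - eapply Rle_trans; [apply Bb; split; lra|]. unfold K. generalize (Rabs_pos (a c)); lra. }
  assert (eps / (2 * K + 2) * (2 * K + 2) = eps) by (field; lra).
  assert ((Rabs (Re w - Re c) + Rabs (Im w - Im c)) * K <= 2 * (eps / (2 * K + 2)) * K)
    by (apply Rmult_le_compat_r; lra).
  nra.
Qed.

End Square.

(** * Closed chains and null-homotopies *)

Fixpoint sum_lt (f : nat -> R) (n : nat) : R :=
  match n with O => 0 | S m => sum_lt f m + f m end.

Lemma sum_lt_ext (f g : nat -> R) n :
  (forall i, (i < n)%nat -> f i = g i) -> sum_lt f n = sum_lt g n.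
Proof.
  induction n; simpl; intros H; auto.
  rewrite IHn by (intros; apply H; lia). rewrite H by lia. auto.
Qed.

Lemma sum_lt_telescope (v : nat -> R) n : sum_lt (fun i => v i - v (S i)) n = v O - v n.
Proof. induction n; simpl; [ring|]. rewrite IHn. ring. Qed.

Lemma sum_lt_zero (f : nat -> R) n : (forall i, (i < n)%nat -> f i = 0) -> sum_lt f n = 0.
Proof.
  intros H. rewrite (sum_lt_ext f (fun _ => 0)) by auto. clear H.
  induction n; simpl; auto. rewrite IHn; ring.
Qed.

Lemma sum_lt_minus (f g : nat -> R) n : sum_lt (fun i => f i - g i) n = sum_lt f n - sum_lt g n.
Proof. induction n; simpl; [ring|]. rewrite IHn. ring. Qed.

Lemma sum_lt_opp (g : nat -> R) n : sum_lt (fun l => - g l) n = - sum_lt g n.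
Proof. induction n; simpl; [ring|]. rewrite IHn. ring. Qed.

Lemma sum_lt_add (f : nat -> R) a b :
  sum_lt f (a + b) = sum_lt f a + sum_lt (fun l => f (a + l)%nat) b.
Proof.
  induction b; simpl; [rewrite Nat.add_0_r; ring|].
  rewrite Nat.add_succ_r. simpl. rewrite IHb. ring.
Qed.

Lemma sum_lt_blocks (f : nat -> R) n M :
  sum_lt f (n * M) = sum_lt (fun k => sum_lt (fun l => f (k * M + l)%nat) M) n.
Proof. induction n; simpl; auto. rewrite Nat.add_comm, sum_lt_add, IHn. auto. Qed.

Lemma sum_lt_first (g : nat -> R) n : sum_lt g (S n) = g O + sum_lt (fun l => g (S l)) n.
Proof. change (S n) with (1 + n)%nat. rewrite sum_lt_add. simpl. ring. Qed.

Lemma sum_lt_rev (f : nat -> R) n : sum_lt f n = sum_lt (fun l => f (n - S l)%nat) n.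
Proof.
  induction n; [reflexivity|].
  rewrite (sum_lt_first (fun l => f (S n - S l)%nat)). replace (S n - 1)%nat with n by lia.
  simpl sum_lt at 1. rewrite IHn, Rplus_comm. f_equal.
Qed.

(* The projection of x onto [0, 1], written with Rabs so that it is visibly continuous. *)
Definition clamp (x : R) : R := let y := (1 + x - Rabs (1 - x)) / 2 in (y + Rabs y) / 2.

Lemma clamp_ge1 x : 1 <= x -> clamp x = 1.
Proof. intros H. unfold clamp, Rabs; repeat destruct Rcase_abs; lra. Qed.
Lemma clamp_le0 x : x <= 0 -> clamp x = 0.
Proof. intros H. unfold clamp, Rabs; repeat destruct Rcase_abs; lra. Qed.
Lemma clamp_unit x : 0 <= x <= 1 -> clamp x = x.
Proof. intros H. unfold clamp, Rabs; repeat destruct Rcase_abs; lra. Qed.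

Lemma continuous_clamp (f : R -> R) x : continuous f x -> continuous (fun t => clamp (f t)) x.
Proof.
  intros Hf.
  apply (continuous_comp (fun t => (1 + f t - Rabs (1 - f t)) / 2) (fun y => (y + Rabs y) / 2)).
  - repeat first [ apply continuous_mult_R | apply continuous_plus_R | apply continuous_opp_R
                 | apply continuous_abs_R | apply continuous_const_R | exact Hf ].
  - repeat first [ apply continuous_mult_R | apply continuous_plus_R | apply continuous_abs_R
                 | apply continuous_const_R | apply continuous_id ].
Qed.

(* The piecewise linear function through the values x 0, ..., x m at the nodes
   t = 0, 1/N, ..., m/N. *)
Fixpoint polyline (x : nat -> R) (N : R) (m : nat) (t : R) : R :=
  match m with
  | O => x O
  | S j => polyline x N j t + clamp (N * t - INR j) * (x (S j) - x j)
  end.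

Lemma continuous_polyline x N m t : continuous (polyline x N m) t.
Proof.
  induction m; simpl; [apply continuous_const_R|].
  apply continuous_plus_R; [auto|]. apply continuous_mult_R; [|apply continuous_const_R].
  apply continuous_clamp. apply continuous_plus_R; [|apply continuous_const_R].
  apply continuous_mult_R; [apply continuous_const_R | apply continuous_id].
Qed.

Lemma polyline_val x N t k m : INR k <= N * t <= INR k + 1 ->
  polyline x N m t = if (m <=? k)%nat then x m else x k + (N * t - INR k) * (x (S k) - x k).
Proof.
  intros Hk. induction m; [reflexivity|].
  cbn [polyline]. rewrite IHm. destruct (Nat.leb_spec m k), (Nat.leb_spec (S m) k).
  - rewrite clamp_ge1; [ring|]. apply le_INR in H0. rewrite S_INR in H0. lra.
  - assert (m = k) by lia. subst. rewrite clamp_unit by lra. ring.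
  - lia.
  - rewrite clamp_le0; [ring|].
    assert (k + 1 <= m)%nat by lia. apply le_INR in H1. rewrite plus_INR in H1. simpl in H1. lra.
Qed.

Definition polygon (n : nat) (p : nat -> C) (t : R) : C :=
  (polyline (fun k => Re (p k)) (INR n) n t, polyline (fun k => Im (p k)) (INR n) n t).

Lemma continuous_polygon n p t : continuous (polygon n p) t.
Proof. apply continuous_pair; apply continuous_polyline. Qed.

Lemma polygon_val n p t k : (k < n)%nat -> INR k <= INR n * t <= INR k + 1 ->
  polygon n p t = (Re (p k) + (INR n * t - INR k) * (Re (p (S k)) - Re (p k)),
                   Im (p k) + (INR n * t - INR k) * (Im (p (S k)) - Im (p k))).
Proof.
  intros H1 H2. unfold polygon. rewrite !(polyline_val _ _ _ k) by auto.
  destruct (Nat.leb_spec n k); [lia | reflexivity].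
Qed.

Lemma polygon_start n p : (0 < n)%nat -> polygon n p 0 = p O.
Proof.
  intros Hn. rewrite (polygon_val n p 0 0) by (auto; simpl; lra).
  destruct (p O); simpl; f_equal; ring.
Qed.

Lemma polygon_end m p : polygon (S m) p 1 = p (S m).
Proof.
  rewrite (polygon_val (S m) p 1 m) by (rewrite ?S_INR; lia || lra).
  rewrite S_INR. destruct (p (S m)); simpl; f_equal; ring.
Qed.

Lemma exists_unit_segment (N : nat) (x : R) : (1 <= N)%nat -> 0 <= x <= INR N ->
  exists k, (k < N)%nat /\ INR k <= x <= INR k + 1.
Proof.
  intros HN. induction N; [lia|]. intros Hx.
  destruct (Nat.eq_dec N 0). { subst. exists O. split; [lia|]. simpl in *. lra. }
  destruct (Rle_dec x (INR N)).
  - destruct IHN as [k [Hk1 Hk2]]; [lia | lra |]. exists k. split; auto.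
  - exists N. rewrite S_INR in Hx. split; [lia | lra].
Qed.

Lemma INR_div_unit (i N : nat) : (i <= N)%nat -> 0 < INR N -> 0 <= INR i / INR N <= 1.
Proof.
  intros Hi HN. apply le_INR in Hi. split.
  - apply Rdiv_le_0_compat; [apply pos_INR | auto].
  - apply (Rmult_le_reg_r (INR N)); [auto|]. field_simplify; lra.
Qed.

Definition square_linked (Omega : C -> Prop) (p q : C) : Prop :=
  exists c r, 0 < r /\ (forall w, in_square c r w -> Omega w) /\ in_square c r p /\ in_square c r q.

Definition square_cell (Omega : C -> Prop) (p q s t : C) : Prop :=
  exists c r, 0 < r /\ (forall w, in_square c r w -> Omega w) /\
    in_square c r p /\ in_square c r q /\ in_square c r s /\ in_square c r t.

Lemma square_linked_sym Omega p q : square_linked Omega p q -> square_linked Omega q p.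
Proof. intros [c [r [H1 [H2 [H3 H4]]]]]. exists c, r. auto. Qed.

Lemma square_linked_center Omega z r w : 0 < r ->
  (forall u, in_square z r u -> Omega u) -> in_square z r w -> square_linked Omega z w.
Proof.
  intros Hr Hs Hw. exists z, r. split; [|split; [|split]]; auto. apply in_square_center, Hr.
Qed.

Lemma polygon_in_domain Omega n p : (0 < n)%nat ->
  (forall k, (k < n)%nat -> square_linked Omega (p k) (p (S k))) ->
  forall t, 0 <= t <= 1 -> Omega (polygon n p t).
Proof.
  intros Hn Hl t Ht. assert (0 < INR n) by (apply lt_0_INR; lia).
  destruct (exists_unit_segment n (INR n * t)) as [k [Hk1 Hk2]]; [lia | nra |].
  rewrite (polygon_val n p t k) by auto.
  destruct (Hl k Hk1) as [c [r [Hr [Hsub [H1 H2]]]]]. apply Hsub, in_square_segment; auto. lra.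
Qed.

Lemma polygon_subdivision n M p k l : (k < n)%nat -> (l <= M)%nat -> (0 < M)%nat ->
  polygon n p (INR (k * M + l) / INR (n * M)) =
  (Re (p k) + INR l / INR M * (Re (p (S k)) - Re (p k)),
   Im (p k) + INR l / INR M * (Im (p (S k)) - Im (p k))).
Proof.
  intros Hk Hl HM. assert (HM' : 0 < INR M) by (apply lt_0_INR; lia).
  assert (Hn' : 0 < INR n) by (apply lt_0_INR; lia).
  assert (Hu := INR_div_unit l M Hl HM').
  assert (Eq : INR n * (INR (k * M + l) / INR (n * M)) = INR k + INR l / INR M).
  { rewrite plus_INR, !mult_INR. field. lra. }
  rewrite (polygon_val n p _ k); rewrite ?Eq; [f_equal; ring | auto | lra].
Qed.

(* A Lebesgue number for a cover of the unit square by neighbourhoods, phrased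
   with a downward closed property Good of subsets of R^2. *)
Lemma lebesgue_number_unit_square (Good : (R -> R -> Prop) -> Prop) :
  (forall A B : R -> R -> Prop, (forall s t, A s t -> B s t) -> Good B -> Good A) ->
  (forall s t, 0 <= s <= 1 -> 0 <= t <= 1 ->
     exists d, 0 < d /\ Good (fun s' t' => Rabs (s' - s) < d /\ Rabs (t' - t) < d)) ->
  exists d, 0 < d /\ forall s t, 0 <= s <= 1 -> 0 <= t <= 1 ->
     Good (fun s' t' => Rabs (s' - s) < d /\ Rabs (t' - t) < d).
Proof.
  intros Hmono Hloc.
  assert (Hex : forall s t : R, exists d, 0 < d /\ (0 <= s <= 1 -> 0 <= t <= 1 ->
            Good (fun s' t' => Rabs (s' - s) < d /\ Rabs (t' - t) < d))).
  { intros s t. destruct (classic (0 <= s <= 1 /\ 0 <= t <= 1)) as [[Hs Ht]|Hn].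
    - destruct (Hloc s t Hs Ht) as [d [Hd HG]]. exists d. auto.
    - exists 1. split; [lra|]. intros. exfalso. auto. }
  set (df := fun s t => proj1_sig (constructive_indefinite_description _ (Hex s t))).
  assert (Hdf : forall s t, 0 < df s t /\ (0 <= s <= 1 -> 0 <= t <= 1 ->
            Good (fun s' t' => Rabs (s' - s) < df s t /\ Rabs (t' - t) < df s t))).
  { intros s t. unfold df. destruct (constructive_indefinite_description _ (Hex s t)). auto. }
  assert (Hpos : forall x : Compactness.Tn 2 R, 0 < df (fst x) (fst (snd x)) / 2).
  { intros x. destruct (Hdf (fst x) (fst (snd x))). lra. }
  destruct (compactness_value 2 (0, (0, tt)) (1, (1, tt))
              (fun x => mkposreal _ (Hpos x))) as [d Hd].
  exists d. split; [apply cond_pos|]. intros s t Hs Ht.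
  assert (Hb : bounded_n 2 (0, (0, tt)) (1, (1, tt)) (s, (t, tt))) by (simpl; repeat split; lra).
  specialize (Hd _ Hb). apply NNPP. intros Hneg. apply Hd.
  intros [[s0 [t0 []]] [[Hb1 [Hb2 _]] [[Hc1 [Hc2 _]] Hdd]]]. simpl in Hc1, Hc2, Hdd.
  apply Hneg. destruct (Hdf s0 t0) as [_ HG].
  eapply Hmono; [|exact (HG Hb1 Hb2)].
  intros s' t' [H1 H2]. revert Hc1 Hc2 H1 H2 Hdd. unfold Rabs; repeat destruct Rcase_abs; lra.
Qed.

Lemma exists_mesh (d : R) (n : nat) : 0 < d -> (0 < n)%nat ->
  exists M, (0 < M)%nat /\ / INR (n * M) < d.
Proof.
  intros Hd Hn. destruct (INR_unbounded (/ d)) as [M HM].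
  assert (Hd' : 0 < / d) by (apply Rinv_0_lt_compat, Hd).
  assert (HM0 : 0 < INR M) by lra.
  assert (Hn' : 1 <= INR n) by (apply (le_INR 1); lia).
  exists M. split; [apply INR_lt; simpl; lra|].
  rewrite mult_INR. replace d with (/ / d) by (field; lra).
  apply Rinv_lt_contravar; [apply Rmult_lt_0_compat; nra | nra].
Qed.

Lemma homotopy_cells_in_squares (Omega : C -> Prop) (H : C -> C) : open Omega ->
  (forall p, continuous H p) ->
  (forall s t, 0 <= s <= 1 -> 0 <= t <= 1 -> Omega (H (s, t))) ->
  exists d, 0 < d /\ forall s t h, 0 <= s -> s + h <= 1 -> 0 <= t -> t + h <= 1 -> 0 <= h < d ->
    square_cell Omega (H (s, t)) (H (s + h, t)) (H (s, t + h)) (H (s + h, t + h)).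
Proof.
  intros Ho Hc Hin.
  set (Good := fun A : R -> R -> Prop => exists c r, 0 < r /\
         (forall w, in_square c r w -> Omega w) /\ forall s t, A s t -> in_square c r (H (s, t))).
  destruct (lebesgue_number_unit_square Good) as [d [Hd Hgood]].
  - intros A B HAB [c [r [Hr [Hsq HB]]]]. exists c, r. auto.
  - intros s t Hs Ht.
    destruct (open_square_nbhd Omega (H (s, t)) Ho (Hin s t Hs Ht)) as [r [Hr Hsq]].
    pose proof (Hc (s, t)) as Hct. unfold continuous in Hct.
    rewrite filterlim_locally in Hct. specialize (Hct (mkposreal r Hr)).
    apply locally_square_iff in Hct. destruct Hct as [d [Hd Hd2]].
    exists d. split; [auto|]. exists (H (s, t)), r. split; [auto | split; [auto|]].
    intros s' t' [H1 H2]. apply ball_square_iff, Hd2. split; simpl; auto.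
  - exists d. split; [auto|]. intros s t h Hs1 Hs2 Ht1 Ht2 Hh.
    destruct (Hgood s t ltac:(lra) ltac:(lra)) as [c [r [Hr [Hsq HA]]]].
    exists c, r. repeat split; auto; apply HA; split; unfold Rabs; repeat destruct Rcase_abs; lra.
Qed.

Section Chains.
Variables (Omega : C -> Prop) (a b : C -> R).
Hypothesis Hform : closed_form Omega a b.

Lemma corner_integral_swap p q : square_linked Omega p q ->
  corner_integral a b q p = - corner_integral a b p q.
Proof.
  intros [c [r [_ [Hs [H1 H2]]]]].
  rewrite (corner_integral_square Omega a b Hform c r Hs p q),
    (corner_integral_square Omega a b Hform c r Hs q p) by auto. ring.
Qed.

Lemma chain_sum_in_square c r (e : nat -> C) M : (forall w, in_square c r w -> Omega w) ->
  (forall l, (l <= M)%nat -> in_square c r (e l)) ->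
  sum_lt (fun l => corner_integral a b (e l) (e (S l))) M = corner_integral a b (e O) (e M).
Proof.
  intros Hsq He. induction M; simpl; [rewrite corner_integral_refl; auto|].
  rewrite IHM by (intros; apply He; lia).
  apply (corner_integral_chasles Omega a b Hform c r); auto; apply He; lia.
Qed.

(* Discrete Stokes: the cell identities telescope row by row, so the bottom row
   of a grid whose sides coincide and whose top row is constant sums to 0. *)
Lemma grid_row_sum_zero N (q : nat -> nat -> C) :
  (forall i j, (i < N)%nat -> (j < N)%nat ->
     square_cell Omega (q i j) (q (S i) j) (q i (S j)) (q (S i) (S j))) ->
  (forall j, (j <= N)%nat -> q O j = q N j) ->
  (forall i, (i <= N)%nat -> q i N = q O N) ->
  sum_lt (fun i => corner_integral a b (q i O) (q (S i) O)) N = 0.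
Proof.
  intros Hcell Hside Htop.
  set (row := fun j => sum_lt (fun i => corner_integral a b (q i j) (q (S i) j)) N).
  assert (Hstep : forall j, (j < N)%nat -> row j = row (S j)).
  { intros j Hj. apply Rminus_diag_uniq. unfold row. rewrite <- sum_lt_minus.
    rewrite (sum_lt_ext _ (fun i => corner_integral a b (q i j) (q i (S j))
                                   - corner_integral a b (q (S i) j) (q (S i) (S j)))).
    - rewrite (sum_lt_telescope (fun i => corner_integral a b (q i j) (q i (S j)))).
      rewrite (Hside j), (Hside (S j)) by lia. ring.
    - intros i Hi. destruct (Hcell i j Hi Hj) as [c [r [_ [Hsq [H1 [H2 [H3 H4]]]]]]].
      apply (corner_integral_cell Omega a b Hform c r Hsq); auto. }
  assert (Hrow : forall j, (j <= N)%nat -> row O = row j).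
  { induction j; intros Hj; [reflexivity|]. rewrite IHj by lia. apply Hstep. lia. }
  change (row O = 0). rewrite (Hrow N (le_n N)). unfold row. apply sum_lt_zero.
  intros i Hi. rewrite (Htop i), (Htop (S i)) by lia. apply corner_integral_refl.
Qed.

Lemma chain_sum_refine n M p : (0 < M)%nat ->
  (forall k, (k < n)%nat -> square_linked Omega (p k) (p (S k))) ->
  sum_lt (fun k => corner_integral a b (p k) (p (S k))) n =
  sum_lt (fun i => corner_integral a b (polygon n p (INR i / INR (n * M)))
                                       (polygon n p (INR (S i) / INR (n * M)))) (n * M).
Proof.
  intros HM Hl. rewrite sum_lt_blocks. apply sum_lt_ext. intros k Hk.
  destruct (Hl k Hk) as [c [r [Hr [Hsq [Hc1 Hc2]]]]].
  set (e := fun l => polygon n p (INR (k * M + l) / INR (n * M))).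
  assert (HM' : 0 < INR M) by (apply lt_0_INR; lia).
  rewrite (sum_lt_ext _ (fun l => corner_integral a b (e l) (e (S l))))
    by (intros l _; unfold e; rewrite <- Nat.add_succ_r; reflexivity).
  rewrite (chain_sum_in_square c r e M Hsq).
  - unfold e. rewrite !polygon_subdivision by (auto; lia).
    replace (INR 0 / INR M) with 0 by (simpl; field; lra).
    replace (INR M / INR M) with 1 by (field; lra).
    destruct (p k), (p (S k)); simpl; f_equal; f_equal; ring.
  - intros l Hlm. unfold e. rewrite polygon_subdivision by auto.
    apply in_square_segment; auto. apply INR_div_unit; auto.
Qed.

Hypothesis HSC : simply_connected Omega.

Lemma closed_chain_sum_zero n p :
  (forall k, (k < n)%nat -> square_linked Omega (p k) (p (S k))) -> p O = p n ->
  sum_lt (fun k => corner_integral a b (p k) (p (S k))) n = 0.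
Proof.
  intros Hl Hloop. destruct n as [|m]; [reflexivity|]. set (n := S m).
  destruct HSC as [[Ho _] Hnull].
  destruct (Hnull (polygon n p)) as [H [HHc [HHin [HH0 [HH1 HHlr]]]]].
  { intros t. apply continuous_polygon. }
  { apply polygon_in_domain; [unfold n; lia | exact Hl]. }
  { unfold n. rewrite polygon_start, polygon_end by lia. exact Hloop. }
  destruct (homotopy_cells_in_squares Omega H Ho HHc HHin) as [d [Hd Hcell]].
  destruct (exists_mesh d n Hd ltac:(unfold n; lia)) as [M [HM HMd]].
  rewrite (chain_sum_refine n M p HM Hl). set (N := (n * M)%nat) in *.
  assert (HN : 0 < INR N) by (apply lt_0_INR; unfold N, n; lia).
  assert (Hunit : forall i, (i <= N)%nat -> 0 <= INR i / INR N <= 1)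
    by (intros; apply INR_div_unit; auto).
  assert (HS : forall i, INR (S i) / INR N = INR i / INR N + / INR N)
    by (intros i; rewrite S_INR; field; lra).
  assert (Hfrac0 : INR 0 / INR N = 0) by (simpl; field; lra).
  assert (Hfrac1 : INR N / INR N = 1) by (field; lra).
  set (q := fun i j => H (INR i / INR N, INR j / INR N)).
  rewrite (sum_lt_ext _ (fun i => corner_integral a b (q i O) (q (S i) O))).
  2: { intros i Hi. unfold q. rewrite Hfrac0, !HH0 by (apply Hunit; lia). reflexivity. }
  apply grid_row_sum_zero.
  - intros i j Hi Hj. unfold q. rewrite !HS.
    assert (Hi' := Hunit (S i) Hi). assert (Hj' := Hunit (S j) Hj). rewrite HS in Hi', Hj'.
    assert (Hi'' := Hunit i (Nat.lt_le_incl _ _ Hi)).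
    assert (Hj'' := Hunit j (Nat.lt_le_incl _ _ Hj)).
    assert (0 < / INR N) by (apply Rinv_0_lt_compat; auto).
    apply Hcell; lra.
  - intros j Hj. unfold q. rewrite Hfrac0, Hfrac1.
    destruct (HHlr _ (Hunit j Hj)) as [-> ->]. reflexivity.
  - intros i Hi. unfold q. rewrite Hfrac1, !HH1 by (auto; apply Hunit; lia). reflexivity.
Qed.

End Chains.

(** * The Poincare lemma on simply connected domains *)

Section Primitive.
Variables (Omega : C -> Prop) (a b : C -> R).
Hypothesis Hform : closed_form Omega a b.
Hypothesis HSC : simply_connected Omega.
Variable z0 : C.
Hypothesis Hz0 : Omega z0.

Definition chain_value (z : C) (s : R) : Prop :=
  exists n (p : nat -> C), p O = z0 /\ p n = z /\
    (forall k, (k < n)%nat -> square_linked Omega (p k) (p (S k))) /\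
    sum_lt (fun k => corner_integral a b (p k) (p (S k))) n = s.

Lemma chain_value_base : chain_value z0 0.
Proof. exists O, (fun _ => z0). repeat split; auto. intros; lia. Qed.

Lemma chain_value_extend z w s : chain_value z s -> square_linked Omega z w ->
  chain_value w (s + corner_integral a b z w).
Proof.
  intros [n [p [H0 [Hn [Hl Hs]]]]] Hzw.
  exists (S n), (fun k => if (k <=? n)%nat then p k else w).
  split; [simpl; auto|]. split; [destruct (Nat.leb_spec (S n) n); [lia | auto]|]. split.
  - intros k Hk. destruct (Nat.leb_spec k n), (Nat.leb_spec (S k) n).
    + apply Hl. lia.
    + assert (k = n) by lia. subst. auto.
    + lia.
    + lia.
  - cbn [sum_lt]. rewrite <- Hs.
    destruct (Nat.leb_spec n n); [|lia]. destruct (Nat.leb_spec (S n) n); [lia|].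
    rewrite Hn. f_equal. apply sum_lt_ext. intros i Hi.
    destruct (Nat.leb_spec i n), (Nat.leb_spec (S i) n); auto; lia.
Qed.

(* Follow the first chain and then the second one backwards: a closed chain. *)
Lemma chain_value_unique z s1 s2 : chain_value z s1 -> chain_value z s2 -> s1 = s2.
Proof.
  intros [n1 [p [Hp0 [Hpn [Hpl Hps]]]]] [n2 [q [Hq0 [Hqn [Hql Hqs]]]]].
  set (r := fun k => if (k <=? n1)%nat then p k else q (n1 + n2 - k)%nat).
  assert (Hr : forall k, (n1 <= k)%nat -> r k = q (n1 + n2 - k)%nat).
  { intros k Hk. unfold r. destruct (Nat.leb_spec k n1); auto. replace k with n1 by lia.
    rewrite Hpn. replace (n1 + n2 - n1)%nat with n2 by lia. auto. }
  assert (Hlink : forall k, (k < n1 + n2)%nat -> square_linked Omega (r k) (r (S k))).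
  { intros k Hk. destruct (Nat.lt_ge_cases k n1).
    - unfold r. destruct (Nat.leb_spec k n1), (Nat.leb_spec (S k) n1); [auto | lia..].
    - rewrite !Hr by lia. apply square_linked_sym.
      replace (n1 + n2 - k)%nat with (S (n1 + n2 - S k))%nat by lia. apply Hql. lia. }
  assert (Hclosed : r O = r (n1 + n2)%nat).
  { rewrite (Hr (n1 + n2)%nat) by lia. replace (n1 + n2 - (n1 + n2))%nat with O by lia.
    unfold r. simpl. congruence. }
  pose proof (closed_chain_sum_zero Omega a b Hform HSC _ r Hlink Hclosed) as Hzero.
  rewrite sum_lt_add in Hzero.
  assert (A1 : sum_lt (fun k => corner_integral a b (r k) (r (S k))) n1 = s1).
  { rewrite <- Hps. apply sum_lt_ext. intros i Hi. unfold r.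
    destruct (Nat.leb_spec i n1), (Nat.leb_spec (S i) n1); [auto | lia..]. }
  assert (A2 : sum_lt (fun l => corner_integral a b (r (n1 + l)%nat) (r (S (n1 + l)))) n2 = - s2).
  { rewrite <- Hqs, (sum_lt_rev (fun k => corner_integral a b (q k) (q (S k)))), <- sum_lt_opp.
    apply sum_lt_ext. intros l Hl. rewrite !Hr by lia.
    replace (n1 + n2 - (n1 + l))%nat with (S (n2 - S l)) by lia.
    replace (n1 + n2 - S (n1 + l))%nat with (n2 - S l)%nat by lia.
    apply (corner_integral_swap Omega a b Hform), Hql. lia. }
  lra.
Qed.

(* The points reachable by chains, and the others, form two disjoint open sets. *)
Lemma chain_value_exists z : Omega z -> exists s, chain_value z s.
Proof.
  intros Hz. destruct HSC as [[Ho [_ Hconn]] _]. apply NNPP. intros Hn.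
  set (U := fun w => Omega w /\ exists s, chain_value w s).
  set (V := fun w => Omega w /\ ~ exists s, chain_value w s).
  assert (HU : open U).
  { intros w [Hw [s Hs]]. destruct (open_square_nbhd Omega w Ho Hw) as [r [Hr Hsq]].
    apply locally_square_iff. exists r. split; [auto|]. intros u Hu. split; [auto|].
    exists (s + corner_integral a b w u). apply chain_value_extend; auto.
    apply (square_linked_center Omega w r); auto. }
  assert (HV : open V).
  { intros w [Hw Hnw]. destruct (open_square_nbhd Omega w Ho Hw) as [r [Hr Hsq]].
    apply locally_square_iff. exists r. split; [auto|]. intros u Hu. split; [auto|].
    intros [s Hs]. apply Hnw. exists (s + corner_integral a b u w). apply chain_value_extend; auto.
    apply square_linked_sym, (square_linked_center Omega w r); auto. }
  destruct (Hconn U V HU HV) as [w [_ [[_ H1] [_ H2]]]]; [| | |auto].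
  - intros w Hw. destruct (classic (exists s, chain_value w s)); [left | right]; split; auto.
  - exists z0. repeat split; auto. exists 0. apply chain_value_base.
  - exists z. repeat split; auto.
Qed.

Lemma ex_primitive_value z : exists s, Omega z -> chain_value z s.
Proof.
  destruct (classic (Omega z)) as [Hz|Hz].
  - destruct (chain_value_exists z Hz) as [s Hs]. exists s. auto.
  - exists 0. intros H; contradiction.
Qed.

Definition primitive (z : C) : R :=
  proj1_sig (constructive_indefinite_description _ (ex_primitive_value z)).

Lemma primitive_chain_value z : Omega z -> chain_value z (primitive z).
Proof.
  unfold primitive. destruct (constructive_indefinite_description _ (ex_primitive_value z)).
  simpl. auto.
Qed.

Lemma primitive_local z r : 0 < r -> (forall u, in_square z r u -> Omega u) ->
  forall w, in_square z r w -> primitive w = primitive z + corner_integral a b z w.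
Proof.
  intros Hr Hs w Hw. assert (Hz : Omega z) by (apply Hs, in_square_center, Hr).
  apply (chain_value_unique w); [apply primitive_chain_value; auto|].
  apply chain_value_extend; [apply primitive_chain_value; auto|].
  apply (square_linked_center Omega z r); auto.
Qed.

End Primitive.

Theorem poincare_lemma Omega a b : closed_form Omega a b -> simply_connected Omega ->
  exists f : C -> R, forall z, Omega z ->
    is_derive (fun t => f (t, Im z)) (Re z) (a z) /\
    is_derive (fun t => f (Re z, t)) (Im z) (b z) /\ continuous f z.
Proof.
  intros Hform HSC. pose proof HSC as [[Ho [[z0 Hz0] _]] _].
  set (f := primitive Omega a b HSC z0 Hz0). exists f. intros z Hz.
  destruct (open_square_nbhd Omega z Ho Hz) as [r [Hr Hs]].
  assert (Hloc := primitive_local Omega a b Hform HSC z0 Hz0 z r Hr Hs).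
  destruct (is_derive_corner_integral Omega a b Hform z r Hs z (in_square_center z r Hr))
    as [Du Dv].
  assert (Hrz : Rabs (Re z - Re z) < r /\ Rabs (Im z - Im z) < r)
    by (split; rewrite Rminus_diag, Rabs_R0; exact Hr).
  split; [|split].
  - apply (is_derive_ext_loc (fun t => f z + corner_integral a b z (t, Im z))).
    + apply (locally_of_Rabs (Re z) _ r Hr). intros t Ht. symmetry. apply Hloc. split; simpl; tauto.
    + replace (a z) with (0 + a z) by ring.
      apply (is_derive_plus (fun _ => _) (fun t => corner_integral a b z (t, Im z))); [|exact Du].
      apply (@is_derive_const R_AbsRing R_NormedModule).
  - apply (is_derive_ext_loc (fun t => f z + corner_integral a b z (Re z, t))).
    + apply (locally_of_Rabs (Im z) _ r Hr). intros t Ht. symmetry. apply Hloc. split; simpl; tauto.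
    + replace (b z) with (0 + b z) by ring.
      apply (is_derive_plus (fun _ => _) (fun t => corner_integral a b z (Re z, t))); [|exact Dv].
      apply (@is_derive_const R_AbsRing R_NormedModule).
  - apply (continuous_ext_loc _ (fun w => f z + corner_integral a b z w)).
    + apply locally_square_iff. exists r. split; [auto|]. intros w Hw. symmetry. apply Hloc, Hw.
    + apply continuous_plus_R; [apply continuous_const_R|].
      apply (continuous_corner_integral Omega a b Hform z r Hs Hr).
Qed.

(** * Partial derivatives and the classes C^1, C^2 *)

(* Coquelicot's derivative lemmas, with the normed-module instances fixed to R. *)
Lemma ex_derive_plus_R (f g : R -> R) x :
  ex_derive f x -> ex_derive g x -> ex_derive (fun t => f t + g t) x.
Proof. apply (@ex_derive_plus R_AbsRing R_NormedModule). Qed.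
Lemma ex_derive_minus_R (f g : R -> R) x :
  ex_derive f x -> ex_derive g x -> ex_derive (fun t => f t - g t) x.
Proof. apply (@ex_derive_minus R_AbsRing R_NormedModule). Qed.
Lemma ex_derive_opp_R (f : R -> R) x : ex_derive f x -> ex_derive (fun t => - f t) x.
Proof. apply (@ex_derive_opp R_AbsRing R_NormedModule). Qed.
Lemma ex_derive_const_R (c : R) x : ex_derive (fun _ => c) x.
Proof. apply (@ex_derive_const R_AbsRing R_NormedModule). Qed.
Lemma ex_derive_ext_loc_R (f g : R -> R) x :
  locally x (fun t => f t = g t) -> ex_derive f x -> ex_derive g x.
Proof. apply (@ex_derive_ext_loc R_AbsRing R_NormedModule). Qed.

Definition C1R (Omega : C -> Prop) (f : C -> R) : Prop :=
  forall z, Omega z ->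
    ex_derive (fun t => f (t, Im z)) (Re z) /\ ex_derive (fun t => f (Re z, t)) (Im z) /\
    continuous f z /\ continuous (pu f) z /\ continuous (pv f) z.

Lemma C2R_iff Omega f : C2R Omega f <-> C1R Omega f /\ C1R Omega (pu f) /\ C1R Omega (pv f).
Proof.
  unfold C2R, C1R. split.
  - intros H. split; [|split]; intros z Hz; specialize (H z Hz); tauto.
  - intros [H1 [H2 H3]] z Hz. specialize (H1 z Hz). specialize (H2 z Hz). specialize (H3 z Hz).
    tauto.
Qed.

Lemma C1R_ext Omega f g : (forall w, f w = g w) -> C1R Omega f -> C1R Omega g.
Proof. intros H. replace g with f; [auto | apply functional_extensionality; auto]. Qed.

Lemma locally_horizontal Omega z : open Omega -> Omega z ->
  locally (Re z) (fun t => Omega (t, Im z)).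
Proof.
  intros Ho Hz. destruct (open_square_nbhd Omega z Ho Hz) as [r [Hr H]].
  exists (mkposreal r Hr). intros t Ht. apply H. split; simpl; [exact Ht|].
  rewrite Rminus_diag, Rabs_R0. auto.
Qed.

Lemma locally_vertical Omega z : open Omega -> Omega z ->
  locally (Im z) (fun t => Omega (Re z, t)).
Proof.
  intros Ho Hz. destruct (open_square_nbhd Omega z Ho Hz) as [r [Hr H]].
  exists (mkposreal r Hr). intros t Ht. apply H. split; simpl; [|exact Ht].
  rewrite Rminus_diag, Rabs_R0. auto.
Qed.

Lemma pu_ext_on Omega f g : open Omega -> (forall w, Omega w -> f w = g w) ->
  forall w, Omega w -> pu f w = pu g w.
Proof.
  intros Ho H w Hw. unfold pu. apply Derive_ext_loc.
  generalize (locally_horizontal Omega w Ho Hw). apply filter_imp. auto.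
Qed.

Lemma pv_ext_on Omega f g : open Omega -> (forall w, Omega w -> f w = g w) ->
  forall w, Omega w -> pv f w = pv g w.
Proof.
  intros Ho H w Hw. unfold pv. apply Derive_ext_loc.
  generalize (locally_vertical Omega w Ho Hw). apply filter_imp. auto.
Qed.

Lemma continuous_ext_on Omega (f g : C -> R) z : open Omega -> Omega z ->
  (forall w, Omega w -> f w = g w) -> continuous f z -> continuous g z.
Proof.
  intros Ho Hz H. apply continuous_ext_loc.
  generalize (Ho z Hz). apply filter_imp. auto.
Qed.

Lemma C1R_ext_on Omega f g : open Omega -> (forall w, Omega w -> f w = g w) ->
  C1R Omega f -> C1R Omega g.
Proof.
  intros Ho H Hf z Hz. destruct (Hf z Hz) as [H1 [H2 [H3 [H4 H5]]]].
  split; [|split; [|split; [|split]]].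
  - eapply ex_derive_ext_loc_R; [|exact H1].
    generalize (locally_horizontal Omega z Ho Hz). apply filter_imp. auto.
  - eapply ex_derive_ext_loc_R; [|exact H2].
    generalize (locally_vertical Omega z Ho Hz). apply filter_imp. auto.
  - apply (continuous_ext_on Omega f g z Ho Hz); auto.
  - apply (continuous_ext_on Omega (pu f) (pu g) z Ho Hz); [|auto].
    apply (pu_ext_on Omega); auto.
  - apply (continuous_ext_on Omega (pv f) (pv g) z Ho Hz); [|auto].
    apply (pv_ext_on Omega); auto.
Qed.

Lemma pu_plus f g z : ex_derive (fun t => f (t, Im z)) (Re z) ->
  ex_derive (fun t => g (t, Im z)) (Re z) -> pu (fun w => f w + g w) z = pu f z + pu g z.
Proof.
  intros. unfold pu. apply (Derive_plus (fun t => f (t, Im z)) (fun t => g (t, Im z))); auto.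
Qed.
Lemma pv_plus f g z : ex_derive (fun t => f (Re z, t)) (Im z) ->
  ex_derive (fun t => g (Re z, t)) (Im z) -> pv (fun w => f w + g w) z = pv f z + pv g z.
Proof.
  intros. unfold pv. apply (Derive_plus (fun t => f (Re z, t)) (fun t => g (Re z, t))); auto.
Qed.
Lemma pu_mult f g z : ex_derive (fun t => f (t, Im z)) (Re z) ->
  ex_derive (fun t => g (t, Im z)) (Re z) ->
  pu (fun w => f w * g w) z = pu f z * g z + f z * pu g z.
Proof.
  intros. unfold pu. destruct z. apply (Derive_mult (fun t => f (t, _)) (fun t => g (t, _))); auto.
Qed.
Lemma pv_mult f g z : ex_derive (fun t => f (Re z, t)) (Im z) ->
  ex_derive (fun t => g (Re z, t)) (Im z) ->
  pv (fun w => f w * g w) z = pv f z * g z + f z * pv g z.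
Proof.
  intros. unfold pv. destruct z. apply (Derive_mult (fun t => f (_, t)) (fun t => g (_, t))); auto.
Qed.
Lemma pu_opp f z : pu (fun w => - f w) z = - pu f z.
Proof. unfold pu. apply (Derive_opp (fun t => f (t, Im z))). Qed.
Lemma pv_opp f z : pv (fun w => - f w) z = - pv f z.
Proof. unfold pv. apply (Derive_opp (fun t => f (Re z, t))). Qed.
Lemma pu_scal (k : R) f z : pu (fun w => k * f w) z = k * pu f z.
Proof. unfold pu. apply (Derive_scal (fun t => f (t, Im z))). Qed.
Lemma pv_scal (k : R) f z : pv (fun w => k * f w) z = k * pv f z.
Proof. unfold pv. apply (Derive_scal (fun t => f (Re z, t))). Qed.
Lemma pu_const c z : pu (fun _ => c) z = 0.
Proof. unfold pu. apply Derive_const. Qed.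
Lemma pv_const c z : pv (fun _ => c) z = 0.
Proof. unfold pv. apply Derive_const. Qed.
Lemma pu_inv f z : ex_derive (fun t => f (t, Im z)) (Re z) -> f z <> 0 ->
  pu (fun w => / f w) z = - pu f z * (/ f z * / f z).
Proof.
  intros. unfold pu. destruct z. rewrite (Derive_inv (fun t => f (t, _))); auto. simpl. field. auto.
Qed.
Lemma pv_inv f z : ex_derive (fun t => f (Re z, t)) (Im z) -> f z <> 0 ->
  pv (fun w => / f w) z = - pv f z * (/ f z * / f z).
Proof.
  intros. unfold pv. destruct z. rewrite (Derive_inv (fun t => f (_, t))); auto. simpl. field. auto.
Qed.

Section C1R_algebra.
Variable Omega : C -> Prop.
Hypothesis Ho : open Omega.

Lemma C1R_const c : C1R Omega (fun _ => c).
Proof.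
  intros z Hz. split; [|split; [|split; [|split]]]; try apply ex_derive_const_R.
  - apply continuous_const_R.
  - eapply continuous_ext; [|apply (continuous_const_R 0)]. intros; rewrite pu_const; auto.
  - eapply continuous_ext; [|apply (continuous_const_R 0)]. intros; rewrite pv_const; auto.
Qed.

Lemma C1R_plus f g : C1R Omega f -> C1R Omega g -> C1R Omega (fun w => f w + g w).
Proof.
  intros Hf Hg z Hz.
  destruct (Hf z Hz) as [F1 [F2 [F3 [F4 F5]]]], (Hg z Hz) as [G1 [G2 [G3 [G4 G5]]]].
  split; [|split; [|split; [|split]]].
  - apply ex_derive_plus_R; auto.
  - apply ex_derive_plus_R; auto.
  - apply continuous_plus_R; auto.
  - apply (continuous_ext_on Omega (fun w => pu f w + pu g w)); [auto | auto | |].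
    + intros w Hw. symmetry. apply pu_plus; [apply (Hf w Hw) | apply (Hg w Hw)].
    + apply continuous_plus_R; auto.
  - apply (continuous_ext_on Omega (fun w => pv f w + pv g w)); [auto | auto | |].
    + intros w Hw. symmetry. apply pv_plus; [apply (Hf w Hw) | apply (Hg w Hw)].
    + apply continuous_plus_R; auto.
Qed.

Lemma C1R_opp f : C1R Omega f -> C1R Omega (fun w => - f w).
Proof.
  intros Hf z Hz. destruct (Hf z Hz) as [F1 [F2 [F3 [F4 F5]]]].
  split; [|split; [|split; [|split]]].
  - apply ex_derive_opp_R; auto.
  - apply ex_derive_opp_R; auto.
  - apply continuous_opp_R; auto.
  - eapply continuous_ext; [|apply (continuous_opp_R _ _ F4)]. intros; rewrite pu_opp; auto.
  - eapply continuous_ext; [|apply (continuous_opp_R _ _ F5)]. intros; rewrite pv_opp; auto.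
Qed.

Lemma C1R_minus f g : C1R Omega f -> C1R Omega g -> C1R Omega (fun w => f w - g w).
Proof. intros. apply C1R_plus; [|apply C1R_opp]; auto. Qed.

Lemma C1R_mult f g : C1R Omega f -> C1R Omega g -> C1R Omega (fun w => f w * g w).
Proof.
  intros Hf Hg z Hz.
  destruct (Hf z Hz) as [F1 [F2 [F3 [F4 F5]]]], (Hg z Hz) as [G1 [G2 [G3 [G4 G5]]]].
  split; [|split; [|split; [|split]]].
  - apply ex_derive_mult; auto.
  - apply ex_derive_mult; auto.
  - apply continuous_mult_R; auto.
  - apply (continuous_ext_on Omega (fun w => pu f w * g w + f w * pu g w)); [auto | auto | |].
    + intros w Hw. symmetry. apply pu_mult; [apply (Hf w Hw) | apply (Hg w Hw)].
    + apply continuous_plus_R; apply continuous_mult_R; auto.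
  - apply (continuous_ext_on Omega (fun w => pv f w * g w + f w * pv g w)); [auto | auto | |].
    + intros w Hw. symmetry. apply pv_mult; [apply (Hf w Hw) | apply (Hg w Hw)].
    + apply continuous_plus_R; apply continuous_mult_R; auto.
Qed.

Lemma C1R_inv f : C1R Omega f -> (forall w, Omega w -> f w <> 0) -> C1R Omega (fun w => / f w).
Proof.
  intros Hf Hn z Hz. destruct (Hf z Hz) as [F1 [F2 [F3 [F4 F5]]]].
  assert (Hcont : forall h, continuous h z ->
            continuous (fun w => - h w * (/ f w * / f w)) z).
  { intros h Hh. apply continuous_mult_R; [apply continuous_opp_R; auto|].
    apply continuous_mult_R; apply continuous_inv_R; auto. }
  split; [|split; [|split; [|split]]].
  - apply (ex_derive_inv (fun t => f (t, Im z))); auto. apply Hn. destruct z; auto.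
  - apply (ex_derive_inv (fun t => f (Re z, t))); auto. apply Hn. destruct z; auto.
  - apply continuous_inv_R; auto.
  - apply (continuous_ext_on Omega (fun w => - pu f w * (/ f w * / f w))); auto.
    intros w Hw. symmetry. apply pu_inv; auto. apply (Hf w Hw).
  - apply (continuous_ext_on Omega (fun w => - pv f w * (/ f w * / f w))); auto.
    intros w Hw. symmetry. apply pv_inv; auto. apply (Hf w Hw).
Qed.

End C1R_algebra.

(** * Derivatives of complex-valued functions *)

Definition ex_derive_C (h : R -> C) (x : R) : Prop :=
  ex_derive (fun t => Re (h t)) x /\ ex_derive (fun t => Im (h t)) x.
Definition Derive_C (h : R -> C) (x : R) : C :=
  (Derive (fun t => Re (h t)) x, Derive (fun t => Im (h t)) x).

Lemma Cpu_Derive_C F z : Cpu F z = Derive_C (fun t => F (t, Im z)) (Re z).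
Proof. reflexivity. Qed.
Lemma Cpv_Derive_C F z : Cpv F z = Derive_C (fun t => F (Re z, t)) (Im z).
Proof. reflexivity. Qed.

Lemma ex_derive_C_plus h1 h2 x : ex_derive_C h1 x -> ex_derive_C h2 x ->
  ex_derive_C (fun t => (h1 t + h2 t)%C) x.
Proof. intros [A B] [C D]. split; simpl; apply ex_derive_plus_R; auto. Qed.
Lemma ex_derive_C_mult h1 h2 x : ex_derive_C h1 x -> ex_derive_C h2 x ->
  ex_derive_C (fun t => (h1 t * h2 t)%C) x.
Proof.
  intros [A B] [C D]. split; simpl.
  - apply ex_derive_minus_R; apply ex_derive_mult; auto.
  - apply ex_derive_plus_R; apply ex_derive_mult; auto.
Qed.
Lemma ex_derive_C_const c x : ex_derive_C (fun _ => c) x.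
Proof. split; apply ex_derive_const_R. Qed.
Lemma ex_derive_C_opp h x : ex_derive_C h x -> ex_derive_C (fun t => (- h t)%C) x.
Proof. intros [A B]. split; simpl; apply ex_derive_opp_R; auto. Qed.
Lemma ex_derive_C_minus h1 h2 x : ex_derive_C h1 x -> ex_derive_C h2 x ->
  ex_derive_C (fun t => (h1 t - h2 t)%C) x.
Proof. intros. apply ex_derive_C_plus; [|apply ex_derive_C_opp]; auto. Qed.

Lemma Cnorm2_neq0 (z : C) : z <> 0%C -> Re z ^ 2 + Im z ^ 2 <> 0.
Proof.
  intros H. destruct z as [a b]. simpl. intros E. apply H.
  assert (a = 0) by nra. assert (b = 0) by nra. subst. reflexivity.
Qed.

Lemma ex_derive_C_inv h x : ex_derive_C h x -> h x <> 0%C ->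
  ex_derive_C (fun t => (/ h t)%C) x.
Proof.
  intros [A B] Hn. assert (Hd := Cnorm2_neq0 _ Hn).
  assert (Ed : ex_derive (fun t => Re (h t) ^ 2 + Im (h t) ^ 2) x)
    by (apply ex_derive_plus_R; apply ex_derive_pow; auto).
  split; simpl.
  - apply (ex_derive_div (fun t => fst (h t)) (fun t => fst (h t) ^ 2 + snd (h t) ^ 2)); auto.
  - apply (ex_derive_div (fun t => - snd (h t)) (fun t => fst (h t) ^ 2 + snd (h t) ^ 2)); auto.
    apply ex_derive_opp_R; auto.
Qed.

Lemma Derive_C_plus h1 h2 x : ex_derive_C h1 x -> ex_derive_C h2 x ->
  Derive_C (fun t => (h1 t + h2 t)%C) x = (Derive_C h1 x + Derive_C h2 x)%C.
Proof.
  intros [A B] [C D]. unfold Derive_C; simpl.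
  rewrite (Derive_plus (fun t => fst (h1 t)) (fun t => fst (h2 t))),
    (Derive_plus (fun t => snd (h1 t)) (fun t => snd (h2 t))) by auto.
  reflexivity.
Qed.

Lemma Derive_C_opp h x : Derive_C (fun t => (- h t)%C) x = (- Derive_C h x)%C.
Proof.
  unfold Derive_C; simpl.
  rewrite (Derive_opp (fun t => fst (h t))), (Derive_opp (fun t => snd (h t))). reflexivity.
Qed.

Lemma Derive_C_minus h1 h2 x : ex_derive_C h1 x -> ex_derive_C h2 x ->
  Derive_C (fun t => (h1 t - h2 t)%C) x = (Derive_C h1 x - Derive_C h2 x)%C.
Proof.
  intros. unfold Cminus. rewrite <- Derive_C_opp.
  apply (Derive_C_plus h1 (fun t => (- h2 t)%C)); [|apply ex_derive_C_opp]; auto.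
Qed.

Lemma Derive_C_const c x : Derive_C (fun _ => c) x = 0%C.
Proof. unfold Derive_C. rewrite !Derive_const. reflexivity. Qed.

Lemma Derive_C_mult h1 h2 x : ex_derive_C h1 x -> ex_derive_C h2 x ->
  Derive_C (fun t => (h1 t * h2 t)%C) x = (Derive_C h1 x * h2 x + h1 x * Derive_C h2 x)%C.
Proof.
  intros [A B] [C D]. unfold Derive_C; simpl.
  rewrite (Derive_minus (fun t => fst (h1 t) * fst (h2 t)) (fun t => snd (h1 t) * snd (h2 t)))
    by (apply ex_derive_mult; auto).
  rewrite (Derive_plus (fun t => fst (h1 t) * snd (h2 t)) (fun t => snd (h1 t) * fst (h2 t)))
    by (apply ex_derive_mult; auto).
  rewrite !Derive_mult by auto.
  apply injective_projections; simpl; unfold Re, Im; ring.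
Qed.

Lemma Derive_C_inv h x : ex_derive_C h x -> h x <> 0%C ->
  Derive_C (fun t => (/ h t)%C) x = (- Derive_C h x * (/ h x * / h x))%C.
Proof.
  intros [A B] Hn. assert (Hd := Cnorm2_neq0 _ Hn). unfold Re, Im in *.
  assert (Ed : ex_derive (fun t => fst (h t) ^ 2 + snd (h t) ^ 2) x)
    by (apply ex_derive_plus_R; apply ex_derive_pow; auto).
  assert (Dd : Derive (fun t => fst (h t) ^ 2 + snd (h t) ^ 2) x =
               2 * fst (h x) * Derive (fun t => fst (h t)) x
               + 2 * snd (h x) * Derive (fun t => snd (h t)) x).
  { rewrite (Derive_plus (fun t => fst (h t) ^ 2) (fun t => snd (h t) ^ 2))
      by (apply ex_derive_pow; auto).
    rewrite (Derive_pow (fun t => fst (h t))), (Derive_pow (fun t => snd (h t))) by auto.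
    simpl. ring. }
  unfold Derive_C; simpl.
  rewrite (Derive_div (fun t => fst (h t)) (fun t => fst (h t) ^ 2 + snd (h t) ^ 2)) by auto.
  rewrite (Derive_div (fun t => - snd (h t)) (fun t => fst (h t) ^ 2 + snd (h t) ^ 2))
    by (auto; apply ex_derive_opp_R; auto).
  rewrite Dd, (Derive_opp (fun t => snd (h t))). unfold Re, Im.
  destruct (h x) as [a b]. simpl in *.
  assert (a * a + b * b <> 0) by (contradict Hd; lra).
  apply injective_projections; simpl; field; auto.
Qed.

Lemma Derive_C_conj h x : Derive_C (fun t => Cconj (h t)) x = Cconj (Derive_C h x).
Proof. unfold Derive_C, Cconj; simpl. rewrite (Derive_opp (fun t => snd (h t))). reflexivity. Qed.

Definition C1C (Omega : C -> Prop) (F : C -> C) : Prop :=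
  C1R Omega (fun w => Re (F w)) /\ C1R Omega (fun w => Im (F w)).

Definition ex_partials (F : C -> C) (w : C) : Prop :=
  ex_derive_C (fun t => F (t, Im w)) (Re w) /\ ex_derive_C (fun t => F (Re w, t)) (Im w).

Lemma C1C_ex_partials Omega F w : C1C Omega F -> Omega w -> ex_partials F w.
Proof.
  intros [H1 H2] Hw. destruct (H1 w Hw) as [A [B _]], (H2 w Hw) as [C [D _]].
  split; split; auto.
Qed.

Lemma ex_partials_plus F G w : ex_partials F w -> ex_partials G w ->
  ex_partials (fun z => (F z + G z)%C) w.
Proof. intros [A B] [C D]. split; apply (ex_derive_C_plus (fun t => F _) (fun t => G _)); auto. Qed.
Lemma ex_partials_minus F G w : ex_partials F w -> ex_partials G w ->
  ex_partials (fun z => (F z - G z)%C) w.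
Proof.
  intros [A B] [C D]. split; apply (ex_derive_C_minus (fun t => F _) (fun t => G _)); auto.
Qed.
Lemma ex_partials_mult F G w : ex_partials F w -> ex_partials G w ->
  ex_partials (fun z => (F z * G z)%C) w.
Proof. intros [A B] [C D]. split; apply (ex_derive_C_mult (fun t => F _) (fun t => G _)); auto. Qed.
Lemma ex_partials_const c w : ex_partials (fun _ => c) w.
Proof. split; apply ex_derive_C_const. Qed.
Lemma ex_partials_inv F w : ex_partials F w -> F w <> 0%C ->
  ex_partials (fun z => (/ F z)%C) w.
Proof. intros [A B] Hn. destruct w. split; apply (ex_derive_C_inv (fun t => F _)); auto. Qed.

Lemma Dzb_plus F G w : ex_partials F w -> ex_partials G w ->
  Dzb (fun z => (F z + G z)%C) w = (Dzb F w + Dzb G w)%C.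
Proof.
  intros [A B] [C D]. unfold Dzb. rewrite !Cpu_Derive_C, !Cpv_Derive_C.
  rewrite (Derive_C_plus (fun t => F _) (fun t => G _)),
    (Derive_C_plus (fun t => F _) (fun t => G _)) by auto.
  ring.
Qed.
Lemma Dzb_minus F G w : ex_partials F w -> ex_partials G w ->
  Dzb (fun z => (F z - G z)%C) w = (Dzb F w - Dzb G w)%C.
Proof.
  intros [A B] [C D]. unfold Dzb. rewrite !Cpu_Derive_C, !Cpv_Derive_C.
  rewrite (Derive_C_minus (fun t => F _) (fun t => G _)),
    (Derive_C_minus (fun t => F _) (fun t => G _)) by auto.
  ring.
Qed.
Lemma Dzb_mult F G w : ex_partials F w -> ex_partials G w ->
  Dzb (fun z => (F z * G z)%C) w = (Dzb F w * G w + F w * Dzb G w)%C.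
Proof.
  intros [A B] [C D]. unfold Dzb. rewrite !Cpu_Derive_C, !Cpv_Derive_C.
  rewrite (Derive_C_mult (fun t => F _) (fun t => G _)),
    (Derive_C_mult (fun t => F _) (fun t => G _)) by auto.
  destruct w; simpl. ring.
Qed.
Lemma Dzb_const c w : Dzb (fun _ => c) w = 0%C.
Proof. unfold Dzb. rewrite !Cpu_Derive_C, !Cpv_Derive_C, !Derive_C_const. ring. Qed.
Lemma Dzb_inv F w : ex_partials F w -> F w <> 0%C ->
  Dzb (fun z => (/ F z)%C) w = (- Dzb F w * (/ F w * / F w))%C.
Proof.
  intros [A B] Hn. unfold Dzb. rewrite !Cpu_Derive_C, !Cpv_Derive_C. destruct w as [x y].
  simpl in *.
  rewrite (Derive_C_inv (fun t => F (t, y))), (Derive_C_inv (fun t => F (x, t))) by auto.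
  ring.
Qed.

Section C1C_algebra.
Variable Omega : C -> Prop.
Hypothesis Ho : open Omega.

Lemma C1C_ext_on F G : (forall w, Omega w -> F w = G w) -> C1C Omega F -> C1C Omega G.
Proof.
  intros H [H1 H2]. split.
  - apply (C1R_ext_on Omega (fun w => Re (F w))); auto. intros w Hw; simpl; rewrite H; auto.
  - apply (C1R_ext_on Omega (fun w => Im (F w))); auto. intros w Hw; simpl; rewrite H; auto.
Qed.

Lemma C1C_plus F G : C1C Omega F -> C1C Omega G -> C1C Omega (fun w => (F w + G w)%C).
Proof.
  intros [A B] [C D]. split.
  - apply (C1R_plus Omega Ho (fun w => Re (F w)) (fun w => Re (G w))); auto.
  - apply (C1R_plus Omega Ho (fun w => Im (F w)) (fun w => Im (G w))); auto.
Qed.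
Lemma C1C_opp F : C1C Omega F -> C1C Omega (fun w => (- F w)%C).
Proof.
  intros [A B]. split.
  - apply (C1R_opp Omega (fun w => Re (F w))); auto.
  - apply (C1R_opp Omega (fun w => Im (F w))); auto.
Qed.
Lemma C1C_minus F G : C1C Omega F -> C1C Omega G -> C1C Omega (fun w => (F w - G w)%C).
Proof. intros. apply C1C_plus; [|apply C1C_opp]; auto. Qed.
Lemma C1C_mult F G : C1C Omega F -> C1C Omega G -> C1C Omega (fun w => (F w * G w)%C).
Proof.
  intros [A B] [C D]. split.
  - apply (C1R_minus Omega Ho (fun w => Re (F w) * Re (G w)) (fun w => Im (F w) * Im (G w)));
      apply (C1R_mult Omega Ho); auto.
  - apply (C1R_plus Omega Ho (fun w => Re (F w) * Im (G w)) (fun w => Im (F w) * Re (G w)));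
      apply (C1R_mult Omega Ho); auto.
Qed.
Lemma C1C_const c : C1C Omega (fun _ => c).
Proof. split; apply C1R_const. Qed.
Lemma C1C_inv F : C1C Omega F -> (forall w, Omega w -> F w <> 0%C) ->
  C1C Omega (fun w => (/ F w)%C).
Proof.
  intros [A B] Hn.
  assert (Hd : C1R Omega (fun w => / (Re (F w) * Re (F w) + Im (F w) * Im (F w)))).
  { apply (C1R_inv Omega Ho).
    - apply (C1R_plus Omega Ho (fun w => Re (F w) * Re (F w)) (fun w => Im (F w) * Im (F w)));
        apply (C1R_mult Omega Ho); auto.
    - intros w Hw. assert (H := Cnorm2_neq0 _ (Hn w Hw)). contradict H. simpl. lra. }
  split.
  - apply (C1R_ext Omega (fun w => Re (F w) * / (Re (F w) * Re (F w) + Im (F w) * Im (F w)))).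
    + intros w. simpl. unfold Rdiv. f_equal. f_equal. unfold Re, Im. ring.
    + apply (C1R_mult Omega Ho (fun w => Re (F w))); auto.
  - apply (C1R_ext Omega (fun w => - Im (F w) * / (Re (F w) * Re (F w) + Im (F w) * Im (F w)))).
    + intros w. simpl. unfold Rdiv. f_equal. f_equal. unfold Re, Im. ring.
    + apply (C1R_mult Omega Ho (fun w => - Im (F w))); auto.
      apply (C1R_opp Omega (fun w => Im (F w))); auto.
Qed.

Lemma C2C_iff F : C2C Omega F <-> C1C Omega F /\ C1C Omega (Cpu F) /\ C1C Omega (Cpv F).
Proof. unfold C2C, C1C. rewrite !C2R_iff. tauto. Qed.

Lemma C2C_C1C F : C2C Omega F -> C1C Omega F.
Proof. rewrite C2C_iff. tauto. Qed.

Lemma C2C_plus F G : C2C Omega F -> C2C Omega G -> C2C Omega (fun w => (F w + G w)%C).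
Proof.
  rewrite !C2C_iff. intros [F1 [F2 F3]] [G1 [G2 G3]].
  split; [|split]; [apply C1C_plus; auto | |].
  - apply (C1C_ext_on (fun w => Cpu F w + Cpu G w)%C); [|apply C1C_plus; auto].
    intros w Hw. rewrite !Cpu_Derive_C. symmetry.
    apply (Derive_C_plus (fun t => F _) (fun t => G _));
      [apply (C1C_ex_partials _ _ w F1 Hw) | apply (C1C_ex_partials _ _ w G1 Hw)].
  - apply (C1C_ext_on (fun w => Cpv F w + Cpv G w)%C); [|apply C1C_plus; auto].
    intros w Hw. rewrite !Cpv_Derive_C. symmetry.
    apply (Derive_C_plus (fun t => F _) (fun t => G _));
      [apply (C1C_ex_partials _ _ w F1 Hw) | apply (C1C_ex_partials _ _ w G1 Hw)].
Qed.

Lemma C2C_mult F G : C2C Omega F -> C2C Omega G -> C2C Omega (fun w => (F w * G w)%C).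
Proof.
  rewrite !C2C_iff. intros [F1 [F2 F3]] [G1 [G2 G3]].
  split; [|split]; [apply C1C_mult; auto | |].
  - apply (C1C_ext_on (fun w => Cpu F w * G w + F w * Cpu G w)%C);
      [|apply C1C_plus; apply C1C_mult; auto].
    intros w Hw. rewrite !Cpu_Derive_C. symmetry. destruct w as [x y].
    apply (Derive_C_mult (fun t => F _) (fun t => G _));
      [apply (C1C_ex_partials _ _ _ F1 Hw) | apply (C1C_ex_partials _ _ _ G1 Hw)].
  - apply (C1C_ext_on (fun w => Cpv F w * G w + F w * Cpv G w)%C);
      [|apply C1C_plus; apply C1C_mult; auto].
    intros w Hw. rewrite !Cpv_Derive_C. symmetry. destruct w as [x y].
    apply (Derive_C_mult (fun t => F _) (fun t => G _));
      [apply (C1C_ex_partials _ _ _ F1 Hw) | apply (C1C_ex_partials _ _ _ G1 Hw)].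
Qed.

Lemma C2C_const c : C2C Omega (fun _ => c).
Proof.
  rewrite C2C_iff. split; [|split]; [apply C1C_const | |].
  - apply (C1C_ext_on (fun _ => 0%C)); [|apply C1C_const].
    intros w _. rewrite Cpu_Derive_C, Derive_C_const. auto.
  - apply (C1C_ext_on (fun _ => 0%C)); [|apply C1C_const].
    intros w _. rewrite Cpv_Derive_C, Derive_C_const. auto.
Qed.

Lemma C2C_inv F : C2C Omega F -> (forall w, Omega w -> F w <> 0%C) ->
  C2C Omega (fun w => (/ F w)%C).
Proof.
  rewrite !C2C_iff. intros [F1 [F2 F3]] Hn.
  assert (Hder : forall G, C1C Omega G -> C1C Omega (fun w => - G w * (/ F w * / F w))%C).
  { intros G HG. apply C1C_mult; [apply C1C_opp; auto|]. apply C1C_mult; apply C1C_inv; auto. }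
  split; [|split]; [apply C1C_inv; auto | |].
  - apply (C1C_ext_on (fun w => - Cpu F w * (/ F w * / F w))%C); [|apply Hder; auto].
    intros w Hw. rewrite !Cpu_Derive_C. symmetry. destruct w as [x y].
    apply (Derive_C_inv (fun t => F (t, y)));
      [apply (C1C_ex_partials _ _ _ F1 Hw) | apply Hn; auto].
  - apply (C1C_ext_on (fun w => - Cpv F w * (/ F w * / F w))%C); [|apply Hder; auto].
    intros w Hw. rewrite !Cpv_Derive_C. symmetry. destruct w as [x y].
    apply (Derive_C_inv (fun t => F (x, t)));
      [apply (C1C_ex_partials _ _ _ F1 Hw) | apply Hn; auto].
Qed.

End C1C_algebra.

(** * Wirtinger derivatives of real functions *)

Lemma Dz_RC f : Dz (RC f) = fun w => ((/ 2 * pu f w), (- / 2 * pv f w)).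
Proof.
  apply functional_extensionality. intros w. unfold Dz, Cpu, Cpv.
  change (pu (fun w0 => Re (RC f w0)) w) with (pu f w).
  change (pv (fun w0 => Re (RC f w0)) w) with (pv f w).
  change (pu (fun w0 => Im (RC f w0)) w) with (pu (fun _ => 0) w).
  change (pv (fun w0 => Im (RC f w0)) w) with (pv (fun _ => 0) w).
  rewrite pu_const, pv_const. apply injective_projections; simpl; field.
Qed.

Lemma Dzb_RC f : Dzb (RC f) = fun w => ((/ 2 * pu f w), (/ 2 * pv f w)).
Proof.
  apply functional_extensionality. intros w. unfold Dzb, Cpu, Cpv.
  change (pu (fun w0 => Re (RC f w0)) w) with (pu f w).
  change (pv (fun w0 => Re (RC f w0)) w) with (pv f w).
  change (pu (fun w0 => Im (RC f w0)) w) with (pu (fun _ => 0) w).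
  change (pv (fun w0 => Im (RC f w0)) w) with (pv (fun _ => 0) w).
  rewrite pu_const, pv_const. apply injective_projections; simpl; field.
Qed.

Lemma Dzb_Dz_RC f z : Dzb (Dz (RC f)) z =
  (/ 4 * (pu (pu f) z + pv (pv f) z), / 4 * (pv (pu f) z - pu (pv f) z)).
Proof.
  rewrite Dz_RC. unfold Dzb, Cpu, Cpv. simpl.
  rewrite (pu_scal (/2) (pu f)), (pu_scal (- / 2) (pv f)), (pv_scal (/2) (pu f)),
    (pv_scal (- /2) (pv f)).
  apply injective_projections; simpl; field.
Qed.

Lemma Dz_Dzb_RC f z : Dz (Dzb (RC f)) z =
  (/ 4 * (pu (pu f) z + pv (pv f) z), / 4 * (pu (pv f) z - pv (pu f) z)).
Proof.
  rewrite Dzb_RC. unfold Dz, Cpu, Cpv. simpl.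
  rewrite (pu_scal (/2) (pu f)), (pu_scal (/ 2) (pv f)), (pv_scal (/2) (pu f)),
    (pv_scal (/2) (pv f)).
  apply injective_projections; simpl; field.
Qed.

Lemma pu_pv_comm Omega f z : open Omega -> C2R Omega f -> Omega z -> pu (pv f) z = pv (pu f) z.
Proof.
  intros Ho Hf Hz. destruct z as [x y].
  assert (Hl : locally_2d (fun u v => Omega (u, v)) x y).
  { apply locally_2d_locally. generalize (Ho _ Hz). apply filter_imp. intros [u v]; auto. }
  destruct (Hf _ Hz) as [_ [_ [_ [_ [_ [_ [_ [_ [_ [_ [C1 [C2 _]]]]]]]]]]]].
  unfold pu, pv. simpl. apply (Schwarz (fun u v => f (u, v)) x y).
  - generalize Hl. apply locally_2d_impl, locally_2d_forall. intros u v Huv.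
    destruct (Hf _ Huv) as [E1 [E2 [E3 [E4 [E5 [E6 _]]]]]]. simpl in *. repeat split; auto.
  - apply (continuity_2d_pt_of_continuous (pu (pv f)) x y). auto.
  - apply (continuity_2d_pt_of_continuous (pv (pu f)) x y). auto.
Qed.

Section Wirtinger.
Variable Omega : C -> Prop.
Hypothesis Ho : open Omega.

Lemma Dzb_Dz_RC_comm f z : C2R Omega f -> Omega z -> Dzb (Dz (RC f)) z = Dz (Dzb (RC f)) z.
Proof. intros Hf Hz. rewrite Dzb_Dz_RC, Dz_Dzb_RC, (pu_pv_comm Omega f z); auto. Qed.

Lemma Im_Dz_Dzb_RC f z : C2R Omega f -> Omega z -> Im (Dz (Dzb (RC f)) z) = 0.
Proof. intros Hf Hz. rewrite Dz_Dzb_RC. simpl. rewrite (pu_pv_comm Omega f z); auto. ring. Qed.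

Lemma C1C_Dz_RC f : C2R Omega f -> C1C Omega (Dz (RC f)).
Proof.
  intros Hf. apply C2R_iff in Hf. destruct Hf as [_ [H1 H2]]. rewrite Dz_RC. split; simpl.
  - apply (C1R_mult Omega Ho (fun _ => / 2) (pu f)); [apply C1R_const | auto].
  - apply (C1R_mult Omega Ho (fun _ => - / 2) (pv f)); [apply C1R_const | auto].
Qed.

Lemma Dz_ext_on (G1 G2 : C -> C) z : Omega z -> (forall w, Omega w -> G1 w = G2 w) ->
  Dz G1 z = Dz G2 z.
Proof.
  intros Hz H. unfold Dz, Cpu, Cpv.
  rewrite (pu_ext_on Omega (fun w => Re (G1 w)) (fun w => Re (G2 w)) Ho),
    (pu_ext_on Omega (fun w => Im (G1 w)) (fun w => Im (G2 w)) Ho),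
    (pv_ext_on Omega (fun w => Re (G1 w)) (fun w => Re (G2 w)) Ho),
    (pv_ext_on Omega (fun w => Im (G1 w)) (fun w => Im (G2 w)) Ho)
    by (auto; intros; rewrite H; auto).
  reflexivity.
Qed.

End Wirtinger.

Lemma Dz_Cconj F z : Dz (fun w => Cconj (F w)) z = Cconj (Dzb F z).
Proof.
  unfold Dz, Dzb. rewrite !Cpu_Derive_C, !Cpv_Derive_C.
  rewrite (Derive_C_conj (fun t => F (t, Im z))), (Derive_C_conj (fun t => F (Re z, t))).
  destruct (Derive_C (fun t => F (t, Im z)) (Re z)), (Derive_C (fun t => F (Re z, t)) (Im z)).
  apply injective_projections; simpl; field.
Qed.

Lemma Dzb_RC_Cconj f w : Dzb (RC f) w = Cconj (Dz (RC f) w).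
Proof. rewrite Dzb_RC, Dz_RC. unfold Cconj. apply injective_projections; simpl; ring. Qed.

Lemma Im_Dzb F z : Im (Dzb F z) = / 2 * (pu (fun w => Im (F w)) z + pv (fun w => Re (F w)) z).
Proof. unfold Dzb, Cpu, Cpv. simpl. field. Qed.

(** * The transformed Weierstrass data *)

Definition g_lambda (g : C -> C) (lam : R) (z : C) : C := (g z / (1 + Ci * RtoC lam * g z))%C.

Lemma Cmod_sqr (w : C) : Cmod w ^ 2 = Re w * Re w + Im w * Im w.
Proof.
  unfold Cmod. rewrite pow2_sqrt; [unfold Re, Im; ring|].
  apply Rplus_le_le_0_compat; apply pow2_ge_0.
Qed.

Lemma pair_norm2_neq0 (x y : R) : ((x, y) : C) <> 0%C -> x * x + y * y <> 0.
Proof. intros H E. apply H. assert (x = 0) by nra. assert (y = 0) by nra. subst; reflexivity. Qed.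

(* (1/w + i lam)(w - i lam |w|^2) = |1 + i lam w|^2 is real. *)
Lemma Im_transfer_factor (w q : C) (lam : R) : w <> 0%C -> Im q = 0 ->
  Im ((/ w + Ci * RtoC lam) * (w * q - Ci * RtoC lam * (RtoC (Cmod w ^ 2) * q)))%C = 0.
Proof.
  intros Hw Hq. rewrite Cmod_sqr.
  destruct w as [x y], q as [q0 q1]; simpl in Hq; subst q1.
  apply pair_norm2_neq0 in Hw. simpl. field. exact Hw.
Qed.

(* ... and it equals |w|^2 / |w / (1 + i lam w)|^2. *)
Lemma laplacian_transfer (w q : C) (lam : R) : w <> 0%C -> (1 + Ci * RtoC lam * w)%C <> 0%C ->
  Im q = 0 ->
  (RtoC (Cmod w ^ 2) * q =
   RtoC (Cmod (w / (1 + Ci * RtoC lam * w)) ^ 2) *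
   Cconj ((/ w + Ci * RtoC lam) * (w * q - Ci * RtoC lam * (RtoC (Cmod w ^ 2) * q))))%C.
Proof.
  intros Hw Hd Hq. rewrite !Cmod_sqr.
  destruct w as [x y], q as [q0 q1]; simpl in Hq; subst q1.
  apply pair_norm2_neq0 in Hw.
  assert (H2 : (1 - lam * y) * (1 - lam * y) + (lam * x) * (lam * x) <> 0).
  { apply pair_norm2_neq0. contradict Hd. injection Hd. intros.
    apply injective_projections; simpl; lra. }
  apply injective_projections; simpl; field; lra.
Qed.

Lemma nondegeneracy_transfer (w p q : C) (lam : R) : w <> 0%C -> (1 + Ci * RtoC lam * w)%C <> 0%C ->
  (p - RtoC (Cmod w ^ 2) * q =
   (p - RtoC (Cmod (w / (1 + Ci * RtoC lam * w)) ^ 2) *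
        ((/ w + Ci * RtoC lam) * (w * q - Ci * RtoC lam * p))) * Cconj (1 + Ci * RtoC lam * w))%C.
Proof.
  intros Hw Hd. rewrite !Cmod_sqr.
  destruct w as [x y], q as [q0 q1], p as [p0 p1].
  apply pair_norm2_neq0 in Hw.
  assert (H2 : (1 - lam * y) * (1 - lam * y) + (lam * x) * (lam * x) <> 0).
  { apply pair_norm2_neq0. contradict Hd. injection Hd. intros.
    apply injective_projections; simpl; lra. }
  apply injective_projections; simpl; field; lra.
Qed.

Section Transform.
Variables (Omega : C -> Prop) (g : C -> C) (P Q : C -> R) (lam : R).
Hypothesis Ho : open Omega.
Hypothesis Hg : C2C Omega g.
Hypothesis HPc : C2R Omega P.
Hypothesis HQc : C2R Omega Q.
Hypothesis Hgn : forall z, Omega z -> g z <> 0%C.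
Hypothesis Hhol : forall z, Omega z -> Dzb g z = 0%C.
Hypothesis Hlap : forall z, Omega z ->
  Dz (Dzb (RC P)) z = (RtoC (Cmod (g z) ^ 2) * Dz (Dzb (RC Q)) z)%C.

Definition dQl (z : C) : C :=
  ((/ g z + Ci * RtoC lam) * (g z * Dz (RC Q) z - Ci * RtoC lam * Dz (RC P) z))%C.

Lemma C1C_dQl : C1C Omega dQl.
Proof.
  assert (G1 := C2C_C1C Omega g Hg). unfold dQl.
  apply (C1C_mult Omega Ho (fun z => / g z + Ci * RtoC lam)%C).
  - apply (C1C_plus Omega Ho (fun z => / g z)%C); [apply C1C_inv; auto | apply C1C_const].
  - apply (C1C_minus Omega Ho (fun z => g z * Dz (RC Q) z)%C).
    + apply (C1C_mult Omega Ho g); [auto | apply C1C_Dz_RC; auto].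
    + apply (C1C_mult Omega Ho (fun _ => Ci * RtoC lam)%C);
        [apply C1C_const | apply C1C_Dz_RC; auto].
Qed.

Lemma Dzb_dQl z : Omega z -> Dzb dQl z =
  ((/ g z + Ci * RtoC lam) *
   (g z * Dz (Dzb (RC Q)) z - Ci * RtoC lam * (RtoC (Cmod (g z) ^ 2) * Dz (Dzb (RC Q)) z)))%C.
Proof.
  intros Hz.
  assert (G1 := C1C_ex_partials _ _ _ (C2C_C1C Omega g Hg) Hz).
  assert (WQ := C1C_ex_partials _ _ _ (C1C_Dz_RC Omega Ho Q HQc) Hz).
  assert (WP := C1C_ex_partials _ _ _ (C1C_Dz_RC Omega Ho P HPc) Hz).
  assert (Wi := ex_partials_inv g z G1 (Hgn z Hz)).
  assert (Wc := ex_partials_const (Ci * RtoC lam)%C z).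
  unfold dQl.
  rewrite (Dzb_mult (fun z => / g z + Ci * RtoC lam)%C
             (fun z => g z * Dz (RC Q) z - Ci * RtoC lam * Dz (RC P) z)%C).
  2: apply ex_partials_plus; auto.
  2: apply ex_partials_minus; apply ex_partials_mult; auto.
  rewrite (Dzb_plus (fun z => / g z)%C (fun _ => Ci * RtoC lam)%C), (Dzb_inv g), Hhol, Dzb_const
    by auto.
  rewrite (Dzb_minus (fun z => g z * Dz (RC Q) z)%C (fun z => Ci * RtoC lam * Dz (RC P) z)%C)
    by (apply ex_partials_mult; auto).
  rewrite (Dzb_mult g (Dz (RC Q))), (Dzb_mult (fun _ => Ci * RtoC lam)%C (Dz (RC P))),
    Hhol, Dzb_const
    by auto.
  rewrite (Dzb_Dz_RC_comm Omega Ho P), (Dzb_Dz_RC_comm Omega Ho Q), Hlap by auto. ring.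
Qed.

(* F_z = dQl for real F means exactly F_u = form_u and F_v = form_v. *)
Definition form_u (w : C) : R := 2 * Re (dQl w).
Definition form_v (w : C) : R := - 2 * Im (dQl w).

Lemma C1R_form_u : C1R Omega form_u.
Proof.
  apply (C1R_mult Omega Ho (fun _ => 2) (fun w => Re (dQl w))); [apply C1R_const | apply C1C_dQl].
Qed.
Lemma C1R_form_v : C1R Omega form_v.
Proof.
  apply (C1R_mult Omega Ho (fun _ => -2) (fun w => Im (dQl w))); [apply C1R_const | apply C1C_dQl].
Qed.

Lemma closed_form_dQl : closed_form Omega form_u form_v.
Proof.
  intros z Hz. destruct (C1R_form_u z Hz) as [A1 [A2 [A3 [A4 A5]]]].
  destruct (C1R_form_v z Hz) as [B1 [B2 [B3 [B4 B5]]]].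
  split; [auto | split; [auto | split; [auto | split; [auto |]]]].
  replace (pu form_v z) with (pv form_u z); [apply Derive_correct; auto|].
  unfold form_u, form_v.
  rewrite (pv_scal 2 (fun w => Re (dQl w))), (pu_scal (-2) (fun w => Im (dQl w))).
  assert (H : Im (Dzb dQl z) = 0).
  { rewrite Dzb_dQl by auto. apply Im_transfer_factor; [auto | apply (Im_Dz_Dzb_RC Omega); auto]. }
  rewrite Im_Dzb in H. lra.
Qed.

Lemma exists_Ql : simply_connected Omega ->
  exists Ql, C2R Omega Ql /\ forall z, Omega z -> Dz (RC Ql) z = dQl z.
Proof.
  intros HSC. destruct (poincare_lemma Omega form_u form_v closed_form_dQl HSC) as [f Hf].
  exists f.
  assert (Pu : forall w, Omega w -> form_u w = pu f w)
    by (intros; symmetry; apply is_derive_unique, Hf; auto).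
  assert (Pv : forall w, Omega w -> form_v w = pv f w)
    by (intros; symmetry; apply is_derive_unique, Hf; auto).
  split.
  - apply C2R_iff. split; [|split].
    + intros z Hz. destruct (Hf z Hz) as [D1 [D2 D3]].
      split; [exists (form_u z); auto|]. split; [exists (form_v z); auto|]. split; [auto|]. split.
      * apply (continuous_ext_on Omega form_u (pu f) z Ho Hz); auto. apply C1R_form_u; auto.
      * apply (continuous_ext_on Omega form_v (pv f) z Ho Hz); auto. apply C1R_form_v; auto.
    + apply (C1R_ext_on Omega form_u (pu f) Ho); [auto | apply C1R_form_u].
    + apply (C1R_ext_on Omega form_v (pv f) Ho); [auto | apply C1R_form_v].
  - intros z Hz. rewrite Dz_RC, <- Pu, <- Pv by auto. unfold form_u, form_v.
    destruct (dQl z); apply injective_projections; simpl; field.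
Qed.

Hypothesis Hd : forall z, Omega z -> (1 + Ci * RtoC lam * g z)%C <> 0%C.

Lemma ex_partials_denominator z : Omega z -> ex_partials (fun z => (1 + Ci * RtoC lam * g z)%C) z.
Proof.
  intros Hz. apply (ex_partials_plus (fun _ => 1%C)); [apply ex_partials_const|].
  apply (ex_partials_mult (fun _ => (Ci * RtoC lam)%C) g); [apply ex_partials_const|].
  apply (C1C_ex_partials Omega g z (C2C_C1C Omega g Hg) Hz).
Qed.

Lemma C2C_g_lambda : C2C Omega (g_lambda g lam).
Proof.
  apply (C2C_mult Omega Ho g); [auto|]. apply (C2C_inv Omega Ho); [|auto].
  apply (C2C_plus Omega Ho (fun _ => 1%C)); [apply C2C_const; auto|].
  apply (C2C_mult Omega Ho (fun _ => (Ci * RtoC lam)%C) g); [apply C2C_const; auto | auto].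
Qed.

Lemma g_lambda_neq0 z : Omega z -> g_lambda g lam z <> 0%C.
Proof.
  intros Hz E. apply (Hgn z Hz). unfold g_lambda in E.
  replace (g z) with (g z / (1 + Ci * RtoC lam * g z) * (1 + Ci * RtoC lam * g z))%C
    by (field; auto).
  rewrite E. ring.
Qed.

Lemma Dzb_g_lambda z : Omega z -> Dzb (g_lambda g lam) z = 0%C.
Proof.
  intros Hz. assert (G1 := C1C_ex_partials Omega g z (C2C_C1C Omega g Hg) Hz).
  assert (Wd := ex_partials_denominator z Hz).
  assert (Wc := ex_partials_const (Ci * RtoC lam)%C z).
  assert (Wl : ex_partials (fun z => (Ci * RtoC lam * g z)%C) z)
    by (apply (ex_partials_mult (fun _ => (Ci * RtoC lam)%C) g); auto).
  assert (Wi : ex_partials (fun z => (/ (1 + Ci * RtoC lam * g z))%C) z)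
    by (apply (ex_partials_inv (fun z => (1 + Ci * RtoC lam * g z))%C); auto).
  unfold g_lambda, Cdiv.
  rewrite (Dzb_mult g (fun z => / (1 + Ci * RtoC lam * g z))%C) by auto.
  rewrite (Dzb_inv (fun z => (1 + Ci * RtoC lam * g z))%C) by auto.
  rewrite (Dzb_plus (fun _ => 1%C)) by (auto; apply ex_partials_const).
  rewrite (Dzb_mult (fun _ => (Ci * RtoC lam)%C) g), !Dzb_const, Hhol by auto.
  ring.
Qed.

Section Transformed.
Variable Ql : C -> R.
Hypothesis HQl : forall z, Omega z -> Dz (RC Ql) z = dQl z.

(* Ql_zbar = conj dQl, so (Ql)_{z zbar} = conj (dQl_zbar). *)
Lemma laplacian_g_lambda z : Omega z ->
  Dz (Dzb (RC P)) z = (RtoC (Cmod (g_lambda g lam z) ^ 2) * Dz (Dzb (RC Ql)) z)%C.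
Proof.
  intros Hz.
  rewrite Hlap, (Dz_ext_on Omega Ho (Dzb (RC Ql)) (fun w => Cconj (dQl w)))
    by (auto; intros w Hw; rewrite Dzb_RC_Cconj, HQl; auto).
  rewrite Dz_Cconj, Dzb_dQl by auto.
  apply laplacian_transfer; auto. apply (Im_Dz_Dzb_RC Omega); auto.
Qed.

Lemma nondegenerate_g_lambda z : Omega z ->
  (Dz (RC P) z - RtoC (Cmod (g z) ^ 2) * Dz (RC Q) z)%C <> 0%C ->
  (Dz (RC P) z - RtoC (Cmod (g_lambda g lam z) ^ 2) * Dz (RC Ql) z)%C <> 0%C.
Proof.
  intros Hz Hn E. apply Hn.
  rewrite (nondegeneracy_transfer (g z) (Dz (RC P) z) (Dz (RC Q) z) lam) by auto.
  rewrite HQl in E by auto. unfold g_lambda, dQl in E. rewrite E. ring.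
Qed.

Lemma WD1_g_lambda : C2R Omega Ql ->
  (forall z, Omega z -> (Dz (RC P) z - RtoC (Cmod (g z) ^ 2) * Dz (RC Q) z)%C <> 0%C) ->
  WD1 Omega (g_lambda g lam) P Ql.
Proof.
  intros HQlc Hnd. split; [apply C2C_g_lambda | split; [auto | split; [auto |]]].
  intros z Hz. split; [|split; [|split]].
  - apply g_lambda_neq0, Hz.
  - apply Dzb_g_lambda, Hz.
  - apply laplacian_g_lambda, Hz.
  - apply nondegenerate_g_lambda, Hnd; exact Hz.
Qed.

End Transformed.
End Transform.

Theorem mainTheorem3 (Omega : C -> Prop) (g : C -> C) (P Q : C -> R) (lam : R) :
  simply_connected Omega ->
  WD1 Omega g P Q ->
  (forall z, Omega z -> (1 + Ci * RtoC lam * g z)%C <> 0%C) ->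
  (exists Ql : C -> R, C2R Omega Ql /\
     forall z, Omega z ->
       Dz (RC Ql) z =
       ((/ g z + Ci * RtoC lam) *
        (g z * Dz (RC Q) z - Ci * RtoC lam * Dz (RC P) z))%C) /\
  (forall Ql : C -> R, C2R Omega Ql ->
     (forall z, Omega z ->
       Dz (RC Ql) z =
       ((/ g z + Ci * RtoC lam) *
        (g z * Dz (RC Q) z - Ci * RtoC lam * Dz (RC P) z))%C) ->
     WD1 Omega (fun z => (g z / (1 + Ci * RtoC lam * g z))%C) P Ql).
Proof.
  intros HSC [Hg [HPc [HQc Hpt]]] Hd.
  assert (Ho : open Omega) by apply HSC.
  assert (Hgn : forall z, Omega z -> g z <> 0%C) by apply Hpt.
  assert (Hhol : forall z, Omega z -> Dzb g z = 0%C) by apply Hpt.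
  assert (Hlap : forall z, Omega z ->
            Dz (Dzb (RC P)) z = (RtoC (Cmod (g z) ^ 2) * Dz (Dzb (RC Q)) z)%C) by apply Hpt.
  assert (Hnd : forall z, Omega z ->
            (Dz (RC P) z - RtoC (Cmod (g z) ^ 2) * Dz (RC Q) z)%C <> 0%C) by apply Hpt.
  split.
  - exact (exists_Ql Omega g P Q lam Ho Hg HPc HQc Hgn Hhol Hlap HSC).
  - intros Ql HQlc HQl.
    exact (WD1_g_lambda Omega g P Q lam Ho Hg HPc HQc Hgn Hhol Hlap Hd Ql HQl HQlc Hnd).
Qed.
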